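(* Let $K$ be a class of structures whose isomorphism problem is $\Sigma^1_1$-complete. If a Turing degree $\mathbf d$ is loquaciously high for isomorphism for $K$, then $\mathbf d$ is uniformly high for isomorphism for $K$ and $\mathcal O$ is c.e. relative to $\mathbf d$.
   Context: $\mathcal O$ denotes Kleene's set of notations for computable ordinals. Fix a standard effective listing $(\mathcal M_i:i\in\omega)$ of all computable structures. The isomorphism problem for $K$ is $\Sigma^1_1$-complete if for every $\Sigma^1_1$ set $X\subseteq\omega$ there is a computable function $n\mapsto(a_n,b_n)$ such that for every $n$, $\mathcal M_{a_n},\mathcal M_{b_n}\in K$, and $\mathcal M_{a_n}\cong\mathcal M_{b_n}$ iff $n\in X$. $\mathbf d$ is uniformly high for isomorphism for $K$ if there are $D\in\mathbf d$ and a Turing functional $\Phi$ such that whenever $\mathcal M_i,\mathcal M_j\in K$ and $\mathcal M_i\cong\mathcal M_j$, the function $n\mapsto\Phi^D(i,j,n)$ is total and is an isomorphism from $\mathcal M_i$ onto $\mathcal M_j$. $\mathbf d$ is loquaciously high for isomorphism for $K$ if there are $D\in\mathbf d$ and a Turing functional $\Theta$ such that $\Theta^D(i,j,n)$ converges for all $i,j,n$, and whenever $\mathcal M_i,\mathcal M_j\in K$ and $\mathcal M_i\cong\mathcal M_j$, the function $\Theta^D(i,j,\cdot)$ is an isomorphism from $\mathcal M_i$ onto $\mathcal M_j$ and $\Theta^D(j,i,\cdot)$ is its inverse. *)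

From Stdlib Require Import Arith List.
Import ListNotations.

Definition pair (x y : nat) : nat := (x + y) * (x + y + 1) / 2 + y.

Definition next_pair (p : nat * nat) : nat * nat :=
  match p with
  | (0, y) => (S y, 0)
  | (S x, y) => (x, S y)
  end.
Definition unpair (n : nat) : nat * nat := Nat.iter n next_pair (0, 0).

(* Unary functions on nat (tuples coded by pairing); the oracle is a
   total function A : nat -> nat. *)
Inductive code : Type :=
| CZero | CSucc | CP1 | CP2 | COrac
| CPair (f g : code)
| CComp (f g : code)
| CRec (f g : code)        (* h<x,0> = f x ; h<x,n+1> = g<x,<n,h<x,n>>> *)
| CMu (f : code).          (* x |-> least n with f<x,n> = 0 *)

Inductive eval (A : nat -> nat) : code -> nat -> nat -> Prop :=
| eZero x : eval A CZero x 0
| eSucc x : eval A CSucc x (S x)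
| eP1 x y : eval A CP1 (pair x y) x
| eP2 x y : eval A CP2 (pair x y) y
| eOrac x : eval A COrac x (A x)
| ePair f g x y z : eval A f x y -> eval A g x z -> eval A (CPair f g) x (pair y z)
| eComp f g x y z : eval A g x y -> eval A f y z -> eval A (CComp f g) x z
| eRec0 f g x y : eval A f x y -> eval A (CRec f g) (pair x 0) y
| eRecS f g x n y z : eval A (CRec f g) (pair x n) y ->
    eval A g (pair x (pair n y)) z -> eval A (CRec f g) (pair x (S n)) z
| eMu f x n : eval A f (pair x n) 0 ->
    (forall m, m < n -> exists y, y <> 0 /\ eval A f (pair x m) y) ->
    eval A (CMu f) x n.

Fixpoint decode_fuel (fuel n : nat) : code :=
  match fuel with
  | 0 => CZero
  | S fu =>
    match n with
    | 0 => CZero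
    | S m =>
      let (t, r) := unpair m in
      let (a, b) := unpair r in
      match t mod 9 with
      | 0 => CZero
      | 1 => CSucc
      | 2 => CP1
      | 3 => CP2
      | 4 => COrac
      | 5 => CPair (decode_fuel fu a) (decode_fuel fu b)
      | 6 => CComp (decode_fuel fu a) (decode_fuel fu b)
      | 7 => CRec (decode_fuel fu a) (decode_fuel fu b)
      | _ => CMu (decode_fuel fu a)
      end
    end
  end.
Definition decode (n : nat) : code := decode_fuel (S n) n.

Definition Phi (A : nat -> nat) (e x y : nat) : Prop := eval A (decode e) x y.
Definition phi (e x y : nat) : Prop := Phi (fun _ => 0) e x y.

(* sets of naturals are nat -> bool; as oracles, their characteristic fn *)
Definition chi (D : nat -> bool) : nat -> nat := fun x => if D x then 1 else 0.

Definition Treducible (B A : nat -> bool) : Prop :=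
  exists e, forall n, Phi (chi A) e n (chi B n).

Definition IsTuringDegree (d : (nat -> bool) -> Prop) : Prop :=
  exists A, forall B, d B <-> (Treducible B A /\ Treducible A B).

(* Structures in the relational language {R_k : k in nat} (each R_k may hold
   of tuples of any finite length); domain a subset of nat. *)
Record structure : Type := Struct {
  sdom : nat -> Prop;
  srel : nat -> list nat -> Prop }.

Fixpoint code_list (t : list nat) : nat :=
  match t with [] => 0 | x :: t' => S (pair x (code_list t')) end.

(* The standard listing: M_i is the structure whose atomic diagram is
   computed by phi_i:  x in dom  iff phi_i(<0,x>) = 1,
   R_k(t)  iff phi_i(<k+1, code t>) = 1. *)
Definition M (i : nat) : structure :=
  Struct (fun x => phi i (pair 0 x) 1)
         (fun k t => phi i (pair (S k) (code_list t)) 1).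

Definition IsCompIndex (i : nat) : Prop :=
  forall x, exists b, b <= 1 /\ phi i x b.

Definition inK (K : structure -> Prop) (i : nat) : Prop :=
  IsCompIndex i /\ K (M i).

Definition IsIso (S T : structure) (f : nat -> nat) : Prop :=
  (forall x, sdom S x -> sdom T (f x)) /\
  (forall x y, sdom S x -> sdom S y -> f x = f y -> x = y) /\
  (forall y, sdom T y -> exists x, sdom S x /\ f x = y) /\
  (forall k t, Forall (sdom S) t -> (srel S k t <-> srel T k (map f t))).

Definition Isomorphic (S T : structure) : Prop := exists f, IsIso S T f.

(* X is Sigma^1_1 iff for some e:  n in X <-> exists f : nat -> nat,
   forall m, Phi_e^f(<n,m>) converges with value 0  (normal form). *)
Definition Sigma11 (X : nat -> Prop) : Prop :=
  exists e, forall n, X n <-> exists f : nat -> nat, forall m, Phi f e (pair n m) 0.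

Definition IsoProblemSigma11Complete (K : structure -> Prop) : Prop :=
  forall X, Sigma11 X ->
  exists e, forall n, exists a b,
    phi e n (pair a b) /\ inK K a /\ inK K b /\
    (Isomorphic (M a) (M b) <-> X n).

Definition UniformlyHigh (K : structure -> Prop) (d : (nat -> bool) -> Prop) : Prop :=
  exists D, d D /\ exists e, forall i j,
    inK K i -> inK K j -> Isomorphic (M i) (M j) ->
    exists f : nat -> nat,
      (forall n, Phi (chi D) e (pair i (pair j n)) (f n)) /\ IsIso (M i) (M j) f.

Definition LoquaciouslyHigh (K : structure -> Prop) (d : (nat -> bool) -> Prop) : Prop :=
  exists D, d D /\ exists e,
    (forall i j n, exists y, Phi (chi D) e (pair i (pair j n)) y) /\
    (forall i j, inK K i -> inK K j -> Isomorphic (M i) (M j) ->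
      exists f g : nat -> nat,
        (forall n, Phi (chi D) e (pair i (pair j n)) (f n)) /\
        (forall n, Phi (chi D) e (pair j (pair i n)) (g n)) /\
        IsIso (M i) (M j) f /\
        (forall x, sdom (M i) x -> g (f x) = x) /\
        (forall y, sdom (M j) y -> f (g y) = y)).

Inductive inO : nat -> Prop :=
| O_one : inO 1
| O_succ a : inO a -> inO (2 ^ a)
| O_lim e : (forall n, exists y, phi e n y) ->
    (forall n y z, phi e n y -> phi e (S n) z -> ltO y z) -> inO (3 * 5 ^ e)
with ltO : nat -> nat -> Prop :=
| lt_succ a : inO a -> ltO a (2 ^ a)
| lt_succ_trans b a : ltO b a -> ltO b (2 ^ a)
| lt_lim b e n y : inO (3 * 5 ^ e) -> phi e n y -> ltO b y -> ltO b (3 * 5 ^ e).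

Definition KleeneO (n : nat) : Prop := inO n.

Definition CErelative (X : nat -> Prop) (d : (nat -> bool) -> Prop) : Prop :=
  exists D, d D /\ exists e, forall n, X n <-> exists y, Phi (chi D) e n y.

(* Uniform highness is immediate: the loquacious functional [Theta] is itself uniform.
   For [O], the point is that every set [X] whose complement is Sigma^1_1, in
   particular [O], is c.e. in [D].  Sigma^1_1-completeness gives a computable [n |-> <a, b>]
   with [M_a], [M_b] in [K] and [M_a ~ M_b] iff [n] is not in [X].  As [Theta^D] is
   total, [M_a ~ M_b] fails iff [Theta^D(a, b, .)] is not an isomorphism with inverse
   [Theta^D(b, a, .)], and such a failure is witnessed by finitely many convergent
   computations; so [X] is Sigma^0_1 in [D].  The complement of [O] is Sigma^1_1
   because [n] is outside [O] iff some set closed under the rules generating [O] omits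
   [n].  Convergent computations are certified by finite computation histories, which
   makes all the matrices involved primitive recursive. *)

From Stdlib Require Import Arith Lia List Setoid Classical ClassicalEpsilon Wf_nat.
Import ListNotations.

Lemma triangle_succ s : S s * (S s + 1) / 2 = s * (s + 1) / 2 + S s.
Proof.
  replace (S s * (S s + 1)) with (s * (s + 1) + S s * 2) by lia.
  rewrite Nat.div_add by lia. reflexivity.
Qed.

Lemma pair_next_pair p :
  pair (fst (next_pair p)) (snd (next_pair p)) = S (pair (fst p) (snd p)).
Proof.
  destruct p as [[|x] y]; simpl; unfold pair.
  - rewrite !Nat.add_0_r. simpl (0 + y). rewrite triangle_succ. lia.
  - replace (x + S y) with (S x + y) by lia. lia.
Qed.

Lemma pair_unpair n : pair (fst (unpair n)) (snd (unpair n)) = n.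
Proof.
  induction n; [reflexivity|].
  unfold unpair; simpl. fold (unpair n). rewrite pair_next_pair, IHn. reflexivity.
Qed.

Lemma pair_bound x y : x <= pair x y /\ y <= pair x y.
Proof.
  unfold pair; split; [|lia].
  enough ((2 * x) / 2 <= (x + y) * (x + y + 1) / 2) as H
    by (rewrite Nat.mul_comm, Nat.div_mul in H by lia; lia).
  apply Nat.Div0.div_le_mono; nia.
Qed.

Lemma unpair_pair_eq n : forall x y, pair x y = n -> unpair n = (x, y).
Proof.
  induction n; intros x y H.
  - destruct (pair_bound x y). replace x with 0 by lia. replace y with 0 by lia. reflexivity.
  - assert (Hp : exists p, next_pair p = (x, y)).
    { destruct y as [|y'].
      + destruct x as [|x']; [discriminate H|]. exists (0, x'). reflexivity.
      + exists (S x, y'). reflexivity. }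
    destruct Hp as [p Hp].
    assert (Hn : pair (fst p) (snd p) = n).
    { pose proof (pair_next_pair p) as E. rewrite Hp in E. simpl in E. lia. }
    unfold unpair; simpl. fold (unpair n). rewrite (IHn _ _ Hn). destruct p; exact Hp.
Qed.

Lemma unpair_pair x y : unpair (pair x y) = (x, y).
Proof. apply unpair_pair_eq; reflexivity. Qed.

Lemma pair_inj x y x' y' : pair x y = pair x' y' -> x = x' /\ y = y'.
Proof.
  intros H. pose proof (unpair_pair x y) as E. rewrite H, unpair_pair in E.
  injection E; auto.
Qed.

Definition fstn n := fst (unpair n).
Definition sndn n := snd (unpair n).

Lemma fstn_pair x y : fstn (pair x y) = x.
Proof. unfold fstn; rewrite unpair_pair; reflexivity. Qed.
Lemma sndn_pair x y : sndn (pair x y) = y.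
Proof. unfold sndn; rewrite unpair_pair; reflexivity. Qed.
Lemma pair_fstn_sndn n : pair (fstn n) (sndn n) = n.
Proof. apply pair_unpair. Qed.

Ltac pair_simpl := repeat match goal with
  | H : context [fstn (pair _ _)] |- _ => rewrite fstn_pair in H
  | H : context [sndn (pair _ _)] |- _ => rewrite sndn_pair in H
  | |- context [fstn (pair _ _)] => rewrite fstn_pair
  | |- context [sndn (pair _ _)] => rewrite sndn_pair
  end.

Section EvalStrongInd.
Variable A : nat -> nat.
Variable P : code -> nat -> nat -> Prop.
Hypothesis hZero : forall x, P CZero x 0.
Hypothesis hSucc : forall x, P CSucc x (S x).
Hypothesis hP1 : forall x y, P CP1 (pair x y) x.
Hypothesis hP2 : forall x y, P CP2 (pair x y) y.
Hypothesis hOrac : forall x, P COrac x (A x).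
Hypothesis hPair : forall f g x y z,
  eval A f x y -> P f x y -> eval A g x z -> P g x z -> P (CPair f g) x (pair y z).
Hypothesis hComp : forall f g x y z,
  eval A g x y -> P g x y -> eval A f y z -> P f y z -> P (CComp f g) x z.
Hypothesis hRec0 : forall f g x y, eval A f x y -> P f x y -> P (CRec f g) (pair x 0) y.
Hypothesis hRecS : forall f g x n y z,
  eval A (CRec f g) (pair x n) y -> P (CRec f g) (pair x n) y ->
  eval A g (pair x (pair n y)) z -> P g (pair x (pair n y)) z ->
  P (CRec f g) (pair x (S n)) z.
Hypothesis hMu : forall f x n, eval A f (pair x n) 0 -> P f (pair x n) 0 ->
  (forall m, m < n -> exists y, y <> 0 /\ eval A f (pair x m) y /\ P f (pair x m) y) ->
  P (CMu f) x n.

(* The generated induction principle gives no hypothesis for the premises of [eMu]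
   hidden under the quantifier; this one does. *)
Fixpoint eval_strong_ind c x y (H : eval A c x y) {struct H} : P c x y.
Proof.
  destruct H.
  - apply hZero.
  - apply hSucc.
  - apply hP1.
  - apply hP2.
  - apply hOrac.
  - apply hPair; auto.
  - eapply hComp; eauto.
  - apply hRec0; auto.
  - eapply hRecS; eauto.
  - apply hMu; auto. intros m Hm. destruct (H0 m Hm) as [y [Hy Hev]].
    exists y. repeat split; [exact Hy|exact Hev|exact (eval_strong_ind _ _ _ Hev)].
Defined.
End EvalStrongInd.

Ltac pair_inv := repeat match goal with
  | E : pair _ _ = pair _ _ |- _ => apply pair_inj in E as [? ?]
  | E : S _ = S _ |- _ => injection E as E
  | E : S _ = 0 |- _ => discriminate E
  | E : 0 = S _ |- _ => discriminate E
  end; subst.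

Lemma eval_functional A c x y1 : eval A c x y1 -> forall y2, eval A c x y2 -> y1 = y2.
Proof.
  intros H. induction H using eval_strong_ind; intros y2 H2;
    inversion H2; subst; pair_inv; auto; try (f_equal; auto; fail).
  - match goal with E : eval A g x _ |- _ => apply IHeval1 in E end; subst; auto.
  - match goal with E : eval A (CRec f g) (pair x n) _ |- _ => apply IHeval1 in E end.
    subst; auto.
  - match goal with
    | Hz : eval A f (pair x y2) 0, Hall : forall m, m < y2 -> _ |- _ =>
      destruct (Nat.lt_trichotomy n y2) as [Hlt|[Heq|Hgt]]; auto;
      [destruct (Hall n Hlt) as [y [Hy Hev]]; apply IHeval in Hev; congruence
      |destruct (H0 y2 Hgt) as [y [Hy [Hev IH]]]; apply IH in Hz; congruence]
    end.
Qed.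

Fixpoint encode (c : code) : nat :=
  match c with
  | CZero => S (pair 0 0)
  | CSucc => S (pair 1 0)
  | CP1 => S (pair 2 0)
  | CP2 => S (pair 3 0)
  | COrac => S (pair 4 0)
  | CPair f g => S (pair 5 (pair (encode f) (encode g)))
  | CComp f g => S (pair 6 (pair (encode f) (encode g)))
  | CRec f g => S (pair 7 (pair (encode f) (encode g)))
  | CMu f => S (pair 8 (pair (encode f) 0))
  end.

Lemma decode_fuel_stable fu1 : forall fu2 n, n < fu1 -> n < fu2 ->
  decode_fuel fu1 n = decode_fuel fu2 n.
Proof.
  induction fu1; intros fu2 n H1 H2; [lia|].
  destruct fu2; [lia|]. simpl. destruct n; [reflexivity|].
  pose proof (pair_unpair n) as E.
  destruct (unpair n) as [t r]. simpl in E.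
  pose proof (pair_unpair r) as E2.
  destruct (unpair r) as [a b]. simpl in E2.
  destruct (pair_bound t r), (pair_bound a b).
  rewrite (IHfu1 fu2 a), (IHfu1 fu2 b) by lia. reflexivity.
Qed.

Definition code_of_tag (k : nat) (ca cb : code) : code :=
  match k with
  | 0 => CZero | 1 => CSucc | 2 => CP1 | 3 => CP2 | 4 => COrac
  | 5 => CPair ca cb | 6 => CComp ca cb | 7 => CRec ca cb | _ => CMu ca end.

Lemma decode_succ_pair t a b :
  decode (S (pair t (pair a b))) = code_of_tag (t mod 9) (decode a) (decode b).
Proof.
  unfold decode. remember (pair t (pair a b)) as n.
  destruct (pair_bound t (pair a b)), (pair_bound a b).
  change (decode_fuel (S (S n)) (S n)) with
    (let (t, r) := unpair n in let (a, b) := unpair r in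
      code_of_tag (t mod 9) (decode_fuel (S n) a) (decode_fuel (S n) b)).
  rewrite Heqn at 1. rewrite !unpair_pair. cbv beta iota.
  rewrite (decode_fuel_stable (S n) (S a) a), (decode_fuel_stable (S n) (S b) b) by lia.
  reflexivity.
Qed.

Lemma decode_encode c : decode (encode c) = c.
Proof.
  (* [pair 0 0] computes to [0], so every code has the shape [S (pair t (pair a b))]. *)
  induction c; simpl encode;
  try (change (pair 0 0) with (pair 0 (pair 0 0)));
  try (change 0 with (pair 0 0) at 2);
  rewrite ?decode_succ_pair; simpl; congruence.
Qed.

(** * Primitive recursive expressions *)

(* Expressions with de Bruijn variables, compiled below into [code]s; they are a
   convenient language for the arithmetical predicates of the proof.  [ERec b s n]
   iterates [s] [n] times from [b], with variable 0 bound to the previous value and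
   variable 1 to the counter. *)
Inductive expr : Type :=
| EVar (i : nat) | EZero | ESucc (e : expr) | EPair (e1 e2 : expr)
| EFst (e : expr) | ESnd (e : expr) | EOracle (e : expr)
| ELet (e1 e2 : expr) | ERec (b s n : expr).

Definition scons (v : nat) (r : nat -> nat) : nat -> nat :=
  fun i => match i with 0 => v | S i' => r i' end.

Fixpoint iter_rec (base : nat) (step : nat -> nat -> nat) (k : nat) : nat :=
  match k with 0 => base | S k' => step k' (iter_rec base step k') end.

Fixpoint sem (A : nat -> nat) (e : expr) (r : nat -> nat) : nat :=
  match e with
  | EVar i => r i
  | EZero => 0
  | ESucc e => S (sem A e r)
  | EPair a b => pair (sem A a r) (sem A b r)
  | EFst e => fstn (sem A e r)
  | ESnd e => sndn (sem A e r)
  | EOracle e => A (sem A e r)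
  | ELet a b => sem A b (scons (sem A a r) r)
  | ERec b s n =>
      iter_rec (sem A b r) (fun k y => sem A s (scons y (scons k r))) (sem A n r)
  end.

Lemma sem_ext A e : forall r r', (forall i, r i = r' i) -> sem A e r = sem A e r'.
Proof.
  induction e; intros r r' H; simpl; auto;
    try (rewrite (IHe r r'); auto); try (rewrite (IHe1 r r'), (IHe2 r r'); auto).
  - rewrite (IHe1 r r' H). apply IHe2. intros [|i]; simpl; auto.
  - rewrite (IHe1 r r' H), (IHe3 r r' H). generalize (sem A e3 r').
    induction n; simpl; auto. rewrite IHn. apply IHe2. intros [|[|i]]; simpl; auto.
Qed.

(* An environment is coded by the right-nested pairs of its values. *)
Fixpoint env_nth (i c : nat) : nat :=
  match i with 0 => fstn c | S i => env_nth i (sndn c) end.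

Fixpoint code_var (i : nat) : code :=
  match i with 0 => CP1 | S i => CComp (code_var i) CP2 end.
Definition code_id := CPair CP1 CP2.

Fixpoint compile (e : expr) : code :=
  match e with
  | EVar i => code_var i
  | EZero => CZero
  | ESucc e => CComp CSucc (compile e)
  | EPair a b => CPair (compile a) (compile b)
  | EFst e => CComp CP1 (compile e)
  | ESnd e => CComp CP2 (compile e)
  | EOracle e => CComp COrac (compile e)
  | ELet a b => CComp (compile b) (CPair (compile a) code_id)
  | ERec b s n => CComp (CRec (compile b)
        (CComp (compile s) (CPair (CComp CP2 CP2) (CPair (CComp CP1 CP2) CP1))))
        (CPair code_id (compile n))
  end.

Lemma eval_P1 A c : eval A CP1 c (fstn c).
Proof. rewrite <- (pair_fstn_sndn c) at 1. apply eP1. Qed.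
Lemma eval_P2 A c : eval A CP2 c (sndn c).
Proof. rewrite <- (pair_fstn_sndn c) at 1. apply eP2. Qed.
Lemma eval_code_id A c : eval A code_id c c.
Proof. rewrite <- (pair_fstn_sndn c) at 2. apply ePair; [apply eval_P1|apply eval_P2]. Qed.
Lemma eval_code_var A i : forall c, eval A (code_var i) c (env_nth i c).
Proof.
  induction i; intros c; simpl; [apply eval_P1|].
  eapply eComp; [apply eval_P2|apply IHi].
Qed.

Lemma env_nth_pair v c i : env_nth i (pair v c) = scons v (fun j => env_nth j c) i.
Proof. destruct i; simpl; pair_simpl; reflexivity. Qed.

Lemma eval_rec_shuffle A x k y :
  eval A (CPair (CComp CP2 CP2) (CPair (CComp CP1 CP2) CP1))
    (pair x (pair k y)) (pair y (pair k x)).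
Proof.
  apply ePair; [eapply eComp; apply eP2|].
  apply ePair; [eapply eComp; [apply eP2|apply eP1]|apply eP1].
Qed.

Theorem compile_correct A e : forall c,
  eval A (compile e) c (sem A e (fun i => env_nth i c)).
Proof.
  induction e; intros c; simpl.
  - apply eval_code_var.
  - apply eZero.
  - eapply eComp; [apply IHe|apply eSucc].
  - apply ePair; auto.
  - eapply eComp; [apply IHe|apply eval_P1].
  - eapply eComp; [apply IHe|apply eval_P2].
  - eapply eComp; [apply IHe|apply eOrac].
  - eapply eComp; [apply ePair; [apply IHe1|apply eval_code_id]|].
    rewrite (sem_ext A e2 _ (fun i => env_nth i (pair (sem A e1 (fun i => env_nth i c)) c)));
      [apply IHe2|]. intros i; symmetry; apply env_nth_pair.
  - eapply eComp; [apply ePair; [apply eval_code_id|apply IHe3]|].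
    generalize (sem A e3 (fun i => env_nth i c)). induction n; simpl.
    + apply eRec0. apply IHe1.
    + eapply eRecS; [exact IHn|].
      eapply eComp; [apply eval_rec_shuffle|].
      match goal with |- eval _ _ ?cc _ =>
        rewrite (sem_ext A e2 _ (fun i => env_nth i cc)); [apply IHe2|] end.
      intros [|[|i]]; simpl; pair_simpl; reflexivity.
Qed.

Fixpoint shift (c d : nat) (e : expr) : expr :=
  match e with
  | EVar i => if i <? c then EVar i else EVar (i + d)
  | EZero => EZero
  | ESucc e => ESucc (shift c d e)
  | EPair a b => EPair (shift c d a) (shift c d b)
  | EFst e => EFst (shift c d e)
  | ESnd e => ESnd (shift c d e)
  | EOracle e => EOracle (shift c d e)
  | ELet a b => ELet (shift c d a) (shift (S c) d b)
  | ERec b s n => ERec (shift c d b) (shift (S (S c)) d s) (shift c d n)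
  end.

Lemma sem_shift A e : forall c d r r', (forall i, i < c -> r' i = r i) ->
  (forall i, c <= i -> r' (i + d) = r i) -> sem A (shift c d e) r' = sem A e r.
Proof.
  induction e; intros c d r r' H1 H2; simpl; try (erewrite ?IHe, ?IHe1, ?IHe2; eauto; fail).
  - destruct (Nat.ltb_spec i c); simpl; auto.
  - erewrite IHe1; eauto. apply IHe2.
    + intros [|i] Hi; simpl; auto. apply H1; lia.
    + intros [|i] Hi; [lia|]. simpl. apply H2. lia.
  - erewrite IHe1, IHe3; eauto. generalize (sem A e3 r).
    induction n; simpl; auto. rewrite IHn. apply IHe2.
    + intros [|[|i]] Hi; simpl; auto. apply H1; lia.
    + intros [|[|i]] Hi; try lia. simpl. apply H2. lia.
Qed.

Lemma sem_shift1 A e v r : sem A (shift 0 1 e) (scons v r) = sem A e r.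
Proof. apply sem_shift; intros i Hi; [lia|]. rewrite Nat.add_1_r; reflexivity. Qed.
Lemma sem_shift2 A e v w r : sem A (shift 0 2 e) (scons v (scons w r)) = sem A e r.
Proof. apply sem_shift; intros i Hi; [lia|]. rewrite Nat.add_comm; reflexivity. Qed.

(* Predicates are expressions read as true exactly when their value is [0]. *)
Fixpoint ENat (k : nat) : expr := match k with 0 => EZero | S k => ESucc (ENat k) end.
Definition EAdd a b := ERec a (ESucc (EVar 0)) b.
Definition EMul a b := ERec EZero (EAdd (EVar 0) (shift 0 2 a)) b.
Definition EPred a := ERec EZero (EVar 1) a.
Definition ESub a b := ERec a (EPred (EVar 0)) b.
Definition EIf0 c t f := ERec t (shift 0 2 f) c.
Definition EPow b n := ERec (ENat 1) (EMul (EVar 0) (shift 0 2 b)) n.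
Definition EEq a b := EAdd (ESub a b) (ESub b a).
Definition EMod9 e := ERec EZero (EIf0 (EEq (EVar 0) (ENat 8)) EZero (ESucc (EVar 0))) e.
Definition EAnd a b := EAdd a b.
Definition EOr a b := EMul a b.
Definition ENot a := EIf0 a (ENat 1) EZero.
Definition EExists_lt n body := ERec (ENat 1) (EMul (EVar 0) (shift 0 1 body)) n.
Definition EForall_lt n body := ERec EZero (EAdd (EVar 0) (shift 0 1 body)) n.

Ltac sem_simpl := cbn [sem iter_rec scons].

Section ExprSemantics.
Variable A : nat -> nat.

Lemma sem_ENat k r : sem A (ENat k) r = k.
Proof. induction k; cbn [sem iter_rec scons ENat]; auto. Qed.

Lemma sem_EAdd a b r : sem A (EAdd a b) r = sem A a r + sem A b r.
Proof. unfold EAdd; sem_simpl. induction (sem A b r); sem_simpl; lia. Qed.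

Lemma sem_EMul a b r : sem A (EMul a b) r = sem A a r * sem A b r.
Proof.
  unfold EMul; sem_simpl. induction (sem A b r); sem_simpl; [lia|].
  rewrite sem_EAdd; sem_simpl. rewrite IHn, sem_shift2. lia.
Qed.

Lemma sem_EPred a r : sem A (EPred a) r = pred (sem A a r).
Proof. unfold EPred; sem_simpl. destruct (sem A a r); reflexivity. Qed.

Lemma sem_ESub a b r : sem A (ESub a b) r = sem A a r - sem A b r.
Proof.
  unfold ESub; sem_simpl. induction (sem A b r); sem_simpl; [lia|].
  rewrite sem_EPred; sem_simpl. rewrite IHn. lia.
Qed.

Lemma sem_EIf0 c t f r :
  sem A (EIf0 c t f) r = match sem A c r with 0 => sem A t r | S _ => sem A f r end.
Proof. unfold EIf0; sem_simpl. destruct (sem A c r); sem_simpl; [reflexivity|apply sem_shift2]. Qed.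

Lemma sem_EPow b n r : sem A (EPow b n) r = sem A b r ^ sem A n r.
Proof.
  unfold EPow; sem_simpl. induction (sem A n r) as [|m IH]; sem_simpl; [reflexivity|].
  rewrite sem_EMul; sem_simpl. rewrite IH, sem_shift2, Nat.pow_succ_r'.
  apply Nat.mul_comm.
Qed.

Lemma sem_EEq a b r : sem A (EEq a b) r = 0 <-> sem A a r = sem A b r.
Proof. unfold EEq. rewrite sem_EAdd, !sem_ESub. lia. Qed.

Lemma succ_mod9 n : S n mod 9 = if n mod 9 =? 8 then 0 else S (n mod 9).
Proof.
  replace (S n) with (n + 1) by lia. rewrite Nat.Div0.add_mod.
  pose proof (Nat.mod_upper_bound n 9 ltac:(lia)).
  destruct (Nat.eqb_spec (n mod 9) 8) as [E|E]; [rewrite E; reflexivity|].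
  change (1 mod 9) with 1. rewrite Nat.mod_small; lia.
Qed.

Lemma sem_EIf0_EEq c k t f r :
  sem A (EIf0 (EEq c (ENat k)) t f) r = if sem A c r =? k then sem A t r else sem A f r.
Proof.
  rewrite sem_EIf0. destruct (sem A (EEq c (ENat k)) r) eqn:E.
  - apply sem_EEq in E. rewrite sem_ENat in E. rewrite E, Nat.eqb_refl. reflexivity.
  - destruct (Nat.eqb_spec (sem A c r) k) as [Hk|]; [|reflexivity].
    rewrite <- (sem_ENat k r), <- sem_EEq in Hk. congruence.
Qed.

Lemma sem_EMod9 e r : sem A (EMod9 e) r = sem A e r mod 9.
Proof.
  unfold EMod9; cbn [sem]. induction (sem A e r) as [|n IH]; [reflexivity|].
  cbn [iter_rec]. rewrite sem_EIf0_EEq. sem_simpl.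
  rewrite IH, succ_mod9. destruct (n mod 9 =? 8); reflexivity.
Qed.

Lemma sem_EAnd a b r : sem A (EAnd a b) r = 0 <-> sem A a r = 0 /\ sem A b r = 0.
Proof. unfold EAnd. rewrite sem_EAdd. lia. Qed.

Lemma sem_EOr a b r : sem A (EOr a b) r = 0 <-> sem A a r = 0 \/ sem A b r = 0.
Proof. unfold EOr. rewrite sem_EMul. lia. Qed.

Lemma sem_ENot a r : sem A (ENot a) r = 0 <-> sem A a r <> 0.
Proof.
  unfold ENot. rewrite sem_EIf0.
  destruct (sem A a r); sem_simpl; rewrite ?sem_ENat; split; congruence.
Qed.

Lemma sem_ENot_EEq a b r : sem A (ENot (EEq a b)) r = 0 <-> sem A a r <> sem A b r.
Proof. rewrite sem_ENot, <- sem_EEq. reflexivity. Qed.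

Lemma sem_EExists_lt n body r : sem A (EExists_lt n body) r = 0 <->
  exists j, j < sem A n r /\ sem A body (scons j r) = 0.
Proof.
  unfold EExists_lt; sem_simpl. induction (sem A n r) as [|m IH]; sem_simpl.
  - split; [discriminate|]. intros [j [Hj _]]; lia.
  - rewrite sem_EMul; sem_simpl. rewrite sem_shift1, Nat.mul_eq_0, IH. split.
    + intros [[j [Hj Hb]]|Hb]; [exists j|exists m]; split; auto.
    + intros [j [Hj Hb]]. destruct (Nat.eq_dec j m); [subst; auto|].
      left; exists j; split; auto; lia.
Qed.

Lemma sem_EForall_lt n body r : sem A (EForall_lt n body) r = 0 <->
  forall j, j < sem A n r -> sem A body (scons j r) = 0.
Proof.
  unfold EForall_lt; sem_simpl. induction (sem A n r) as [|m IH]; sem_simpl.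
  - split; auto. intros; lia.
  - rewrite sem_EAdd; sem_simpl. rewrite sem_shift1, Nat.eq_add_0, IH. split.
    + intros [H1 H2] j Hj. destruct (Nat.eq_dec j m); [subst; auto|apply H1; lia].
    + intros H; split; auto.
Qed.
End ExprSemantics.

Definition iter_sndn (k n : nat) : nat := Nat.iter k sndn n.
Definition EIterSnd k e := ERec e (ESnd (EVar 0)) k.

Lemma sem_EIterSnd A k e r : sem A (EIterSnd k e) r = iter_sndn (sem A k r) (sem A e r).
Proof.
  unfold EIterSnd, iter_sndn; cbn [sem]. induction (sem A k r); [reflexivity|].
  cbn [iter_rec sem scons] in *. rewrite IHn. reflexivity.
Qed.

(* An expression in the environment [n, m] as a code acting on [<n, m>]. *)
Definition code_of_binary (e : expr) : code :=
  CComp (compile e) (CPair CP1 (CPair CP2 CZero)).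

Definition env2 (n m : nat) : nat -> nat := scons n (scons m (fun _ => 0)).

Lemma eval_code_of_binary A e n m :
  eval A (code_of_binary e) (pair n m) (sem A e (env2 n m)).
Proof.
  unfold code_of_binary. eapply eComp.
  - apply ePair; [apply eP1|]. apply ePair; [apply eP2|apply eZero].
  - erewrite (sem_ext A e (env2 n m)); [apply compile_correct|].
    intros [|[|i]]; simpl; pair_simpl; auto.
    induction i; simpl; auto.
Qed.

Lemma Phi_code_of_binary A e n m y :
  Phi A (encode (code_of_binary e)) (pair n m) y <-> y = sem A e (env2 n m).
Proof.
  unfold Phi. rewrite decode_encode. split.
  - intros H. exact (eval_functional _ _ _ _ H _ (eval_code_of_binary A e n m)).
  - intros ->. apply eval_code_of_binary.
Qed.

Lemma Sigma11_of_expr (X : nat -> Prop) (e : expr) :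
  (forall n, X n <-> exists f, forall m, sem f e (env2 n m) = 0) -> Sigma11 X.
Proof.
  intros H. exists (encode (code_of_binary e)). intros n. rewrite H.
  split; intros [f Hf]; exists f; intros m; specialize (Hf m);
    rewrite Phi_code_of_binary in *; congruence.
Qed.

Lemma CErelative_of_expr (X : nat -> Prop) (d : (nat -> bool) -> Prop) D (e : expr) : d D ->
  (forall n, X n <-> exists w, sem (chi D) e (env2 n w) = 0) -> CErelative X d.
Proof.
  intros HD HX. exists D. split; [exact HD|].
  exists (encode (CMu (code_of_binary e))). intros n. unfold Phi. rewrite decode_encode, HX.
  split.
  - intros Hex.
    destruct (dec_inh_nat_subset_has_unique_least_element
      (fun w => sem (chi D) e (env2 n w) = 0) (fun w => Nat.eq_decidable _ 0) Hex)
      as [w [[Hw Hmin] _]].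
    exists w. apply eMu.
    + rewrite <- Hw. apply eval_code_of_binary.
    + intros m Hm. exists (sem (chi D) e (env2 n m)). split; [|apply eval_code_of_binary].
      intros H. specialize (Hmin m H). lia.
  - intros [w Hw]. inversion Hw as [| | | | | | | | | f' x' n' Hz _]; subst.
    exists w. symmetry. exact (eval_functional _ _ _ _ Hz _ (eval_code_of_binary _ _ _ _)).
Qed.

(** * Computation histories *)

(* A computation history is a finite list of entries [<e, x, y, z>], each recording
   [Phi_e(x) = y] (with [z] the intermediate value of a composition or recursion step)
   and justified by one rule of [eval] from earlier entries.  Validity of a history is
   a bounded, hence primitive recursive, property, while [eval] is not. *)

(* With [o = false] this is the empty oracle of [phi]. *)
Definition oracle_if (o : bool) (A : nat -> nat) : nat -> nat :=
  fun x => if o then A x else 0.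

Definition entry e x y z := pair e (pair x (pair y z)).
Definition ent_code n := fstn n.
Definition ent_in n := fstn (sndn n).
Definition ent_out n := fstn (sndn (sndn n)).
Definition ent_aux n := sndn (sndn (sndn n)).

Lemma ent_code_entry e x y z : ent_code (entry e x y z) = e.
Proof. unfold ent_code, entry; pair_simpl; reflexivity. Qed.
Lemma ent_in_entry e x y z : ent_in (entry e x y z) = x.
Proof. unfold ent_in, entry; pair_simpl; reflexivity. Qed.
Lemma ent_out_entry e x y z : ent_out (entry e x y z) = y.
Proof. unfold ent_out, entry; pair_simpl; reflexivity. Qed.
Lemma ent_aux_entry e x y z : ent_aux (entry e x y z) = z.
Proof. unfold ent_aux, entry; pair_simpl; reflexivity. Qed.

Definition code_tag e := fstn (pred e) mod 9.
Definition code_left e := fstn (sndn (pred e)).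
Definition code_right e := sndn (sndn (pred e)).

Lemma decode_tag e :
  decode e = code_of_tag (code_tag e) (decode (code_left e)) (decode (code_right e)).
Proof.
  destruct e as [|m]; [reflexivity|].
  unfold code_tag, code_left, code_right; simpl pred.
  rewrite <- (pair_fstn_sndn m) at 1. rewrite <- (pair_fstn_sndn (sndn m)) at 1.
  apply decode_succ_pair.
Qed.

Definition occurs (g : nat -> nat) (i : nat) (P : nat -> Prop) : Prop :=
  exists j, j < i /\ P (g j).

Definition recorded g i e x y :=
  occurs g i (fun n => ent_code n = e /\ ent_in n = x /\ ent_out n = y).
Definition recorded_nonzero g i e x :=
  occurs g i (fun n => ent_code n = e /\ ent_in n = x /\ ent_out n <> 0).

(* Clause [k] is the rule of [eval] for codes with tag [k]. *)
Definition step_ok (o : bool) (A : nat -> nat) (g : nat -> nat) (i : nat) : Prop :=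
  let n := g i in let e := ent_code n in let x := ent_in n in
  let y := ent_out n in let z := ent_aux n in
  let k := code_tag e in let a := code_left e in let b := code_right e in
  (k = 0 /\ y = 0) \/ (k = 1 /\ y = S x) \/ (k = 2 /\ y = fstn x) \/ (k = 3 /\ y = sndn x) \/
  (k = 4 /\ y = oracle_if o A x) \/
  (k = 5 /\ recorded g i a x (fstn y) /\ recorded g i b x (sndn y)) \/
  (k = 6 /\ recorded g i b x z /\ recorded g i a z y) \/
  (k = 7 /\ ((sndn x = 0 /\ recorded g i a (fstn x) y) \/
             (sndn x <> 0 /\ recorded g i e (pair (fstn x) (pred (sndn x))) z /\
              recorded g i b (pair (fstn x) (pair (pred (sndn x)) z)) y))) \/
  (k = 8 /\ recorded g i a (pair x y) 0 /\ forall m, m < y -> recorded_nonzero g i a (pair x m)).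

Lemma step_ok_transfer o A g g' i i' : g' i' = g i ->
  (forall P, occurs g i P -> occurs g' i' P) -> step_ok o A g i -> step_ok o A g' i'.
Proof.
  intros Eg Hocc H. unfold step_ok, recorded, recorded_nonzero in *. rewrite Eg.
  cbv zeta in *. intuition auto.
Qed.

Lemma step_ok_sound o A g : forall i, (forall j, j <= i -> step_ok o A g j) ->
  eval (oracle_if o A) (decode (ent_code (g i))) (ent_in (g i)) (ent_out (g i)).
Proof.
  intros i. induction i as [i IH] using lt_wf_ind. intros Hv.
  assert (Hrec : forall e x y, recorded g i e x y -> eval (oracle_if o A) (decode e) x y).
  { intros e x y [j [Hj [<- [<- <-]]]]. apply IH; auto. intros; apply Hv; lia. }
  assert (Hnz : forall e x, recorded_nonzero g i e x ->
                exists y, y <> 0 /\ eval (oracle_if o A) (decode e) x y).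
  { intros e x [j [Hj [<- [<- Hy]]]]. exists (ent_out (g j)).
    split; auto. apply IH; auto. intros; apply Hv; lia. }
  pose proof (Hv i (le_n i)) as Hi. unfold step_ok in Hi. cbv zeta in Hi.
  rewrite decode_tag.
  destruct Hi as [[Hk ->]|[[Hk ->]|[[Hk ->]|[[Hk ->]|[[Hk ->]|[[Hk [H1 H2]]|[[Hk [H1 H2]]
    |[[Hk [[H0 H1]|[H0 [H1 H2]]]]|[Hk [H1 H2]]]]]]]]]]; rewrite Hk; simpl code_of_tag.
  - apply eZero.
  - apply eSucc.
  - apply eval_P1.
  - apply eval_P2.
  - apply eOrac.
  - rewrite <- (pair_fstn_sndn (ent_out (g i))). apply ePair; auto.
  - eapply eComp; apply Hrec; eauto.
  - rewrite <- (pair_fstn_sndn (ent_in (g i))), H0. apply eRec0. auto.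
  - rewrite <- (pair_fstn_sndn (ent_in (g i))).
    destruct (sndn (ent_in (g i))) as [|n]; [lia|]. simpl pred in *.
    eapply eRecS; [|apply Hrec; exact H2].
    apply Hrec in H1. rewrite decode_tag, Hk in H1. exact H1.
  - apply eMu; auto.
Qed.

Definition lookup (L : list nat) : nat -> nat := fun j => nth j L 0.

Definition valid_list o A (L : list nat) := forall i, i < length L -> step_ok o A (lookup L) i.

Lemma occurs_app_l L1 L2 i P : i <= length L1 ->
  occurs (lookup L1) i P -> occurs (lookup (L1 ++ L2)) i P.
Proof. intros Hi [j [Hj Hp]]. exists j. unfold lookup. rewrite app_nth1 by lia. auto. Qed.

Lemma occurs_app_r L1 L2 i P :
  occurs (lookup L2) i P -> occurs (lookup (L1 ++ L2)) (length L1 + i) P.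
Proof.
  intros [j [Hj Hp]]. exists (length L1 + j). unfold lookup. rewrite app_nth2_plus.
  split; [lia|auto].
Qed.

Lemma valid_list_nil o A : valid_list o A [].
Proof. intros i Hi. simpl in Hi. lia. Qed.

Lemma valid_list_app o A L1 L2 :
  valid_list o A L1 -> valid_list o A L2 -> valid_list o A (L1 ++ L2).
Proof.
  intros H1 H2 i Hi. rewrite length_app in Hi.
  destruct (Nat.lt_ge_cases i (length L1)) as [Hl|Hl].
  - apply (step_ok_transfer o A (lookup L1) _ i i); auto.
    + unfold lookup. apply app_nth1; auto.
    + intros P. apply occurs_app_l. lia.
  - replace i with (length L1 + (i - length L1)) by lia.
    apply (step_ok_transfer o A (lookup L2) _ (i - length L1)).
    + unfold lookup. apply app_nth2_plus.
    + intros P. apply occurs_app_r.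
    + apply H2; lia.
Qed.

Lemma valid_list_snoc o A L n :
  valid_list o A L -> step_ok o A (lookup (L ++ [n])) (length L) -> valid_list o A (L ++ [n]).
Proof.
  intros HL Hn i Hi. rewrite length_app in Hi; simpl in Hi.
  destruct (Nat.lt_ge_cases i (length L)) as [Hl|Hl].
  - apply (step_ok_transfer o A (lookup L) _ i i); auto.
    + unfold lookup. apply app_nth1; auto.
    + intros P. apply occurs_app_l. lia.
  - replace i with (length L) by lia. exact Hn.
Qed.

Lemma lookup_snoc_last L n : lookup (L ++ [n]) (length L) = n.
Proof. unfold lookup. rewrite app_nth2, Nat.sub_diag by lia. reflexivity. Qed.

Lemma occurs_snoc_last L n (P : nat -> Prop) :
  P n -> occurs (lookup (L ++ [n])) (length (L ++ [n])) P.
Proof.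
  intros Hn. exists (length L). rewrite lookup_snoc_last, length_app; simpl. split; auto; lia.
Qed.

Definition in_history L P := occurs (lookup L) (length L) P.

Lemma in_history_app_l L1 L2 P : in_history L1 P -> in_history (L1 ++ L2) P.
Proof.
  intros H. unfold in_history. destruct H as [j [Hj Hp]]. exists j. unfold lookup.
  rewrite app_nth1, length_app by lia. split; [lia|auto].
Qed.

Lemma in_history_app_r L1 L2 P : in_history L2 P -> in_history (L1 ++ L2) P.
Proof. intros H. unfold in_history. rewrite length_app. apply occurs_app_r, H. Qed.

Lemma valid_list_collect o A N (P : list nat -> nat -> Prop) :
  (forall L1 L2 m, P L1 m -> P (L1 ++ L2) m) -> (forall L1 L2 m, P L2 m -> P (L1 ++ L2) m) ->
  (forall m, m < N -> exists L, valid_list o A L /\ P L m) ->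
  exists L, valid_list o A L /\ forall m, m < N -> P L m.
Proof.
  intros Hl Hr. induction N; intros H.
  - exists []. split; [apply valid_list_nil|intros; lia].
  - destruct IHN as [L1 [V1 P1]]. { intros; apply H; lia. }
    destruct (H N) as [L2 [V2 P2]]; [lia|].
    exists (L1 ++ L2). split; [apply valid_list_app; auto|].
    intros m Hm. destruct (Nat.eq_dec m N); [subst; auto|apply Hl, P1; lia].
Qed.

Definition records L e x y :=
  in_history L (fun n => ent_code n = e /\ ent_in n = x /\ ent_out n = y).

Lemma code_tag_cases e :
  let k := code_tag e in let ca := decode (code_left e) in let cb := decode (code_right e) in
  (k = 0 /\ decode e = CZero) \/ (k = 1 /\ decode e = CSucc) \/ (k = 2 /\ decode e = CP1) \/
  (k = 3 /\ decode e = CP2) \/ (k = 4 /\ decode e = COrac) \/ (k = 5 /\ decode e = CPair ca cb) \/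
  (k = 6 /\ decode e = CComp ca cb) \/ (k = 7 /\ decode e = CRec ca cb) \/
  (k = 8 /\ decode e = CMu ca).
Proof.
  cbv zeta. rewrite decode_tag.
  assert (H : code_tag e < 9) by (apply Nat.mod_upper_bound; lia).
  destruct (code_tag e) as [|[|[|[|[|[|[|[|[|k]]]]]]]]]; simpl; try tauto. lia.
Qed.

Lemma records_extend o A L e x y z :
  valid_list o A L -> step_ok o A (lookup (L ++ [entry e x y z])) (length L) ->
  exists L', valid_list o A L' /\ records L' e x y.
Proof.
  intros HL Hn. exists (L ++ [entry e x y z]). split; [apply valid_list_snoc; auto|].
  apply occurs_snoc_last. rewrite ent_code_entry, ent_in_entry, ent_out_entry. auto.
Qed.

Lemma recorded_of_records L n e x y :
  records L e x y -> recorded (lookup (L ++ [n])) (length L) e x y.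
Proof. apply occurs_app_l. lia. Qed.

Lemma recorded_nonzero_of_in_history L n e x :
  in_history L (fun n => ent_code n = e /\ ent_in n = x /\ ent_out n <> 0) ->
  recorded_nonzero (lookup (L ++ [n])) (length L) e x.
Proof. apply occurs_app_l. lia. Qed.

Ltac new_step :=
  unfold step_ok; cbv zeta;
  rewrite lookup_snoc_last, ent_code_entry, ent_in_entry, ent_out_entry, ent_aux_entry.

Lemma records_mu o A e x n L1 : code_tag e = 8 ->
  valid_list o A L1 -> records L1 (code_left e) (pair x n) 0 ->
  (forall m, m < n -> exists L, valid_list o A L /\
     in_history L (fun k => ent_code k = code_left e /\ ent_in k = pair x m /\ ent_out k <> 0)) ->
  exists L, valid_list o A L /\ records L e x n.
Proof.
  intros Hk V1 H1 Hnz.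
  destruct (valid_list_collect o A n (fun L m => in_history L
    (fun k => ent_code k = code_left e /\ ent_in k = pair x m /\ ent_out k <> 0))
    (fun _ _ _ => in_history_app_l _ _ _) (fun _ _ _ => in_history_app_r _ _ _) Hnz)
    as [L2 [V2 H2]].
  apply (records_extend o A (L1 ++ L2) e x n 0); [apply valid_list_app; auto|].
  new_step. do 8 right. split; [exact Hk|]. split.
  - apply recorded_of_records. apply in_history_app_l; auto.
  - intros m Hm. apply recorded_nonzero_of_in_history. apply in_history_app_r; auto.
Qed.

Theorem history_list_complete o A c x y : eval (oracle_if o A) c x y ->
  forall e, decode e = c -> exists L, valid_list o A L /\ records L e x y.
Proof.
  intros H. induction H using eval_strong_ind; intros e He;
  destruct (code_tag_cases e) as [[Hk E]|[[Hk E]|[[Hk E]|[[Hk E]|[[Hk E]|[[Hk E]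
    |[[Hk E]|[[Hk E]|[Hk E]]]]]]]]]; rewrite He in E; try discriminate E;
  try (injection E as Ea Eb); try (injection E as Ea).
  - apply (records_extend o A [] e x 0 0); [apply valid_list_nil|]. new_step. tauto.
  - apply (records_extend o A [] e x (S x) 0); [apply valid_list_nil|]. new_step. tauto.
  - apply (records_extend o A [] e (pair x y) x 0); [apply valid_list_nil|].
    new_step. pair_simpl. tauto.
  - apply (records_extend o A [] e (pair x y) y 0); [apply valid_list_nil|].
    new_step. pair_simpl. tauto.
  - apply (records_extend o A [] e x (oracle_if o A x) 0); [apply valid_list_nil|].
    new_step. tauto.
  - destruct (IHeval1 _ (eq_sym Ea)) as [L1 [V1 H1]], (IHeval2 _ (eq_sym Eb)) as [L2 [V2 H2]].
    apply (records_extend o A (L1 ++ L2) e x (pair y z) 0); [apply valid_list_app; auto|].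
    new_step. pair_simpl. do 5 right; left. split; [exact Hk|].
    split; apply recorded_of_records; [apply in_history_app_l|apply in_history_app_r]; auto.
  - destruct (IHeval1 _ (eq_sym Eb)) as [L1 [V1 H1]], (IHeval2 _ (eq_sym Ea)) as [L2 [V2 H2]].
    apply (records_extend o A (L1 ++ L2) e x z y); [apply valid_list_app; auto|].
    new_step. do 6 right; left. split; [exact Hk|].
    split; apply recorded_of_records; [apply in_history_app_l|apply in_history_app_r]; auto.
  - destruct (IHeval _ (eq_sym Ea)) as [L1 [V1 H1]].
    apply (records_extend o A L1 e (pair x 0) y 0); [assumption|].
    new_step. pair_simpl. do 7 right; left. split; [exact Hk|].
    left. split; auto. apply recorded_of_records; auto.
  - destruct (IHeval1 _ He) as [L1 [V1 H1]], (IHeval2 _ (eq_sym Eb)) as [L2 [V2 H2]].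
    apply (records_extend o A (L1 ++ L2) e (pair x (S n)) z y); [apply valid_list_app; auto|].
    new_step. pair_simpl. do 7 right; left. split; [exact Hk|]. right. simpl pred.
    split; [lia|].
    split; apply recorded_of_records; [apply in_history_app_l|apply in_history_app_r]; auto.
  - destruct (IHeval _ (eq_sym Ea)) as [L1 [V1 H1]].
    apply (records_mu o A e x n L1 Hk V1 H1). intros m Hm.
    destruct (H0 m Hm) as [y' [Hy' [_ IH]]].
    destruct (IH _ (eq_sym Ea)) as [L [VL [j [Hj [F1 [F2 F3]]]]]].
    exists L. split; auto. exists j. repeat split; auto. congruence.
Qed.

Fixpoint code_seq (L : list nat) : nat :=
  match L with [] => 0 | a :: L => pair a (code_seq L) end.
Definition coded_nth (l j : nat) : nat := fstn (iter_sndn j l).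

Lemma coded_nth_code_seq L : forall j, coded_nth (code_seq L) j = nth j L 0.
Proof.
  unfold coded_nth, iter_sndn. induction L as [|a L IH]; intros j; simpl.
  - assert (Nat.iter j sndn 0 = 0) as -> by (induction j; simpl; auto; rewrite IHj; auto).
    destruct j; reflexivity.
  - destruct j; simpl; [apply fstn_pair|].
    rewrite <- IH, <- Nat.iter_succ, Nat.iter_succ_r, sndn_pair. reflexivity.
Qed.

Lemma occurs_ext g g' i P : (forall j, g j = g' j) -> occurs g i P -> occurs g' i P.
Proof. intros E [j [Hj Hp]]. exists j. rewrite <- E. auto. Qed.

(* A history is coded by the pair of its length and its entries. *)
Definition valid_history o A w := forall i, i < fstn w -> step_ok o A (coded_nth (sndn w)) i.
Definition history_has w e x y := recorded (coded_nth (sndn w)) (fstn w) e x y.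

Theorem history_sound o A w e x y :
  valid_history o A w -> history_has w e x y -> eval (oracle_if o A) (decode e) x y.
Proof.
  intros HV [j [Hj [<- [<- <-]]]]. apply step_ok_sound. intros; apply HV; lia.
Qed.

Lemma history_of_list o A L : valid_list o A L ->
  valid_history o A (pair (length L) (code_seq L)) /\
  forall P, in_history L P -> occurs (coded_nth (code_seq L)) (length L) P.
Proof.
  intros HV. unfold valid_history. pair_simpl. split.
  - intros i Hi. apply (step_ok_transfer o A (lookup L) _ i i).
    + apply coded_nth_code_seq.
    + intros P. apply occurs_ext. intros j; symmetry; apply coded_nth_code_seq.
    + apply HV; auto.
  - intros P. apply occurs_ext. intros j; symmetry; apply coded_nth_code_seq.
Qed.

Theorem history_complete_many o A N (F : nat -> nat * nat * nat) :
  (forall i, i < N -> let '(e, x, y) := F i in eval (oracle_if o A) (decode e) x y) ->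
  exists w, valid_history o A w /\ forall i, i < N -> let '(e, x, y) := F i in history_has w e x y.
Proof.
  intros H.
  destruct (valid_list_collect o A N (fun L i => let '(e, x, y) := F i in records L e x y))
    as [L [HV HL]].
  { intros L1 L2 m. destruct (F m) as [[e x] y]. apply in_history_app_l. }
  { intros L1 L2 m. destruct (F m) as [[e x] y]. apply in_history_app_r. }
  { intros m Hm. specialize (H m Hm). destruct (F m) as [[e x] y].
    apply (history_list_complete o A _ _ _ H e eq_refl). }
  destruct (history_of_list o A L HV) as [HW Hocc].
  exists (pair (length L) (code_seq L)). split; auto.
  intros i Hi. specialize (HL i Hi). destruct (F i) as [[e x] y].
  unfold history_has. pair_simpl. apply Hocc, HL.
Qed.

Corollary history_complete o A e x y : eval (oracle_if o A) (decode e) x y ->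
  exists w, valid_history o A w /\ history_has w e x y.
Proof.
  intros H. destruct (history_complete_many o A 1 (fun _ => (e, x, y))) as [w [HV Hw]].
  - intros i _. exact H.
  - exists w. split; auto. exact (Hw 0 ltac:(lia)).
Qed.

Lemma phi_of_history A w e x y :
  valid_history false A w -> history_has w e x y -> phi e x y.
Proof. apply history_sound. Qed.

Lemma history_of_phi A e x y :
  phi e x y -> exists w, valid_history false A w /\ history_has w e x y.
Proof. apply (history_complete false A). Qed.

Lemma Phi_of_history A w e x y :
  valid_history true A w -> history_has w e x y -> Phi A e x y.
Proof. apply history_sound. Qed.

Lemma history_of_Phi A e x y :
  Phi A e x y -> exists w, valid_history true A w /\ history_has w e x y.
Proof. apply (history_complete true A). Qed.

Definition EEntry l j := EFst (EIterSnd j l).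
Definition EEntCode n := EFst n.
Definition EEntIn n := EFst (ESnd n).
Definition EEntOut n := EFst (ESnd (ESnd n)).
Definition EEntAux n := ESnd (ESnd (ESnd n)).

Definition ERecorded bound l e x y :=
  EExists_lt bound (ELet (EEntry (shift 0 1 l) (EVar 0))
    (EAnd (EEq (EEntCode (EVar 0)) (shift 0 2 e))
      (EAnd (EEq (EEntIn (EVar 0)) (shift 0 2 x)) (EEq (EEntOut (EVar 0)) (shift 0 2 y))))).
Definition ERecordedNonzero bound l e x :=
  EExists_lt bound (ELet (EEntry (shift 0 1 l) (EVar 0))
    (EAnd (EEq (EEntCode (EVar 0)) (shift 0 2 e))
      (EAnd (EEq (EEntIn (EVar 0)) (shift 0 2 x)) (ENot (EEntOut (EVar 0)))))).

Section HistoryExprSemantics.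
Variable A : nat -> nat.

Lemma sem_EEntry l j r : sem A (EEntry l j) r = coded_nth (sem A l r) (sem A j r).
Proof. unfold EEntry, coded_nth. cbn [sem]. rewrite sem_EIterSnd. reflexivity. Qed.

Lemma sem_ERecorded b l e x y r : sem A (ERecorded b l e x y) r = 0 <->
  recorded (coded_nth (sem A l r)) (sem A b r) (sem A e r) (sem A x r) (sem A y r).
Proof.
  unfold ERecorded, recorded, occurs. rewrite sem_EExists_lt. cbn [sem].
  split; intros [j [Hj H]]; exists j; split; auto; revert H;
  rewrite !sem_EAnd, !sem_EEq; unfold EEntCode, EEntIn, EEntOut, ent_code, ent_in, ent_out;
  cbn [sem scons]; rewrite sem_EEntry, !sem_shift2; cbn [sem scons]; rewrite sem_shift1; auto.
Qed.

Lemma sem_ERecordedNonzero b l e x r : sem A (ERecordedNonzero b l e x) r = 0 <->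
  recorded_nonzero (coded_nth (sem A l r)) (sem A b r) (sem A e r) (sem A x r).
Proof.
  unfold ERecordedNonzero, recorded_nonzero, occurs. rewrite sem_EExists_lt. cbn [sem].
  split; intros [j [Hj H]]; exists j; split; auto; revert H;
  rewrite !sem_EAnd, !sem_EEq, sem_ENot;
  unfold EEntCode, EEntIn, EEntOut, ent_code, ent_in, ent_out;
  cbn [sem scons]; rewrite sem_EEntry, !sem_shift2; cbn [sem scons]; rewrite sem_shift1; auto.
Qed.
End HistoryExprSemantics.

(* The body of [EStepOk] is evaluated in the environment
   [k, b, a, e - 1, z, y, x, e, entry, i, w] built by the [ELet]s of [EStepOk]. *)
Definition EStepOkBody (o : bool) : expr :=
  let k := EVar 0 in let b := EVar 1 in let a := EVar 2 in let z := EVar 4 in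
  let y := EVar 5 in let x := EVar 6 in let e := EVar 7 in let i := EVar 9 in
  let l := ESnd (EVar 10) in
  let Rec u v t := ERecorded i l u v t in
  EOr (EAnd (EEq k (ENat 0)) (EEq y EZero))
 (EOr (EAnd (EEq k (ENat 1)) (EEq y (ESucc x)))
 (EOr (EAnd (EEq k (ENat 2)) (EEq y (EFst x)))
 (EOr (EAnd (EEq k (ENat 3)) (EEq y (ESnd x)))
 (EOr (EAnd (EEq k (ENat 4)) (EEq y (if o then EOracle x else EZero)))
 (EOr (EAnd (EEq k (ENat 5)) (EAnd (Rec a x (EFst y)) (Rec b x (ESnd y))))
 (EOr (EAnd (EEq k (ENat 6)) (EAnd (Rec b x z) (Rec a z y)))
 (EOr (EAnd (EEq k (ENat 7)) (EOr (EAnd (EEq (ESnd x) EZero) (Rec a (EFst x) y))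
          (EAnd (ENot (ESnd x)) (EAnd (Rec e (EPair (EFst x) (EPred (ESnd x))) z)
                                 (Rec b (EPair (EFst x) (EPair (EPred (ESnd x)) z)) y)))))
      (EAnd (EEq k (ENat 8)) (EAnd (Rec a (EPair x y) EZero)
            (EForall_lt y (ERecordedNonzero (EVar 10) (ESnd (EVar 11)) (EVar 3)
                             (EPair (EVar 7) (EVar 0))))))))))))).

(* In the environment [i, w]. *)
Definition EStepOk (o : bool) : expr :=
  ELet (EEntry (ESnd (EVar 1)) (EVar 0)) (ELet (EEntCode (EVar 0)) (ELet (EEntIn (EVar 1))
  (ELet (EEntOut (EVar 2)) (ELet (EEntAux (EVar 3)) (ELet (EPred (EVar 3))
  (ELet (EFst (ESnd (EVar 0))) (ELet (ESnd (ESnd (EVar 1))) (ELet (EMod9 (EFst (EVar 2)))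
  (EStepOkBody o))))))))).

Lemma sem_EStepOk A o i w r :
  sem A (EStepOk o) (scons i (scons w r)) = 0 <-> step_ok o A (coded_nth (sndn w)) i.
Proof.
  unfold EStepOk, EEntCode, EEntIn, EEntOut, EEntAux. cbn [sem scons].
  rewrite sem_EEntry, sem_EPred, sem_EMod9. cbn [sem scons].
  unfold EStepOkBody. cbv zeta.
  do 3 (rewrite ?sem_EOr, ?sem_EAnd, ?sem_EEq, ?sem_ERecorded, ?sem_ENot, ?sem_EForall_lt,
          ?sem_ENat, ?sem_EPred; cbn [sem scons]).
  setoid_rewrite sem_ERecordedNonzero. cbn [sem scons].
  unfold step_ok, code_tag, code_left, code_right, ent_code, ent_in, ent_out, ent_aux, oracle_if.
  cbv zeta. destruct o; cbn [sem scons]; reflexivity.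
Qed.

Definition EValidHistory o w := ELet w (EForall_lt (EFst (EVar 0)) (EStepOk o)).
Definition EHistoryHas w e x y := ERecorded (EFst w) (ESnd w) e x y.

Lemma sem_EValidHistory A o w r :
  sem A (EValidHistory o w) r = 0 <-> valid_history o A (sem A w r).
Proof.
  unfold EValidHistory, valid_history. cbn [sem]. rewrite sem_EForall_lt. cbn [sem scons].
  split; intros H i Hi; apply (sem_EStepOk A o i _ r); apply H; auto.
Qed.

Lemma sem_EHistoryHas A w e x y r : sem A (EHistoryHas w e x y) r = 0 <->
  history_has (sem A w r) (sem A e r) (sem A x r) (sem A y r).
Proof. unfold EHistoryHas, history_has. rewrite sem_ERecorded. reflexivity. Qed.

Definition ECoord e i := EEntry e (ENat i).

Lemma sem_ECoord A e i r : sem A (ECoord e i) r = coded_nth (sem A e r) i.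
Proof. unfold ECoord. rewrite sem_EEntry, sem_ENat. reflexivity. Qed.

Definition EImp a b := EOr (ENot a) b.

Lemma sem_EImp A a b r : sem A (EImp a b) r = 0 <-> (sem A a r = 0 -> sem A b r = 0).
Proof.
  unfold EImp. rewrite sem_EOr, sem_ENot.
  destruct (Nat.eq_dec (sem A a r) 0); intuition congruence.
Qed.

Fixpoint ECases (t : expr) (cs : list expr) (d : expr) : expr :=
  match cs with
  | [] => d
  | c :: cs => EIf0 t c (ECases (EPred t) cs d)
  end.

Lemma sem_ECases A t cs d r : sem A (ECases t cs d) r = 0 <->
  match nth_error cs (sem A t r) with Some c => sem A c r = 0 | None => sem A d r = 0 end.
Proof.
  revert t. induction cs as [|c cs IH]; intros t; cbn [ECases nth_error].
  - destruct (sem A t r); reflexivity.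
  - rewrite sem_EIf0. destruct (sem A t r) eqn:E; [reflexivity|].
    rewrite IH, sem_EPred, E. reflexivity.
Qed.

(** * The complement of Kleene's O is Sigma^1_1 *)

(* [n] is outside [O] iff some [f], read as a set [{x | claims_O f x}] and a relation
   [claims_lt f], is closed under the rules defining [O] and [<_O] but omits [n].  The
   premise of the limit rule is Pi^0_2; to keep the matrix Pi^0_1 in [m], [f <2, e>]
   must also refute every limit notation it does not claim. *)
Definition claims_O (f : nat -> nat) x := f (pair 0 x) = 0.
Definition claims_lt (f : nat -> nat) x y := f (pair 1 (pair x y)) = 0.
Definition lim_notation e := 3 * 5 ^ e.

(* A refutation is [<0, k>] with [phi_e(k)] divergent (so no [q] codes a history of a
   value), or [<1, [k; y; z; s]>] with [s] a history of [phi_e(k) = y] and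
   [phi_e(k + 1) = z] where [y <_O z] is not claimed. *)
Definition limit_refuted f e q : Prop :=
  let W := f (pair 2 e) in let D := sndn W in
  (fstn W = 0 /\ ~ (valid_history false f (fstn q) /\ history_has (fstn q) e D (sndn q))) \/
  (fstn W = 1 /\
    let k := coded_nth D 0 in let y := coded_nth D 1 in
    let z := coded_nth D 2 in let s := coded_nth D 3 in
    valid_history false f s /\ history_has s e k y /\ history_has s e (S k) z /\
    ~ claims_lt f y z).

Definition notO_matrix f n m : Prop :=
  let p := sndn m in
  match fstn m with
  | 0 => ~ claims_O f n
  | 1 => claims_O f p -> claims_O f (2 ^ p)
  | 2 => claims_O f (lim_notation (fstn p)) \/ limit_refuted f (fstn p) (sndn p)
  | 3 => claims_O f p -> claims_lt f p (2 ^ p)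
  | 4 => claims_lt f (fstn p) (sndn p) -> claims_lt f (fstn p) (2 ^ sndn p)
  | 5 => let b := coded_nth p 0 in let e := coded_nth p 1 in let k := coded_nth p 2 in
         let y := coded_nth p 3 in let s := coded_nth p 4 in
         claims_O f (lim_notation e) -> valid_history false f s -> history_has s e k y ->
         claims_lt f b y -> claims_lt f b (lim_notation e)
  | _ => claims_O f 1
  end.

Scheme inO_mut := Induction for inO Sort Prop
with ltO_mut := Induction for ltO Sort Prop.

Ltac matrix_at H t p :=
  specialize (H (pair t p)); unfold notO_matrix in H; pair_simpl;
  cbv zeta in H.

Lemma claims_of_closed f n : (forall m, notO_matrix f n m) ->
  forall x, inO x -> claims_O f x.
Proof.
  intros H x Hx.
  apply (inO_mut (fun x _ => claims_O f x) (fun b a _ => claims_lt f b a)); auto; clear x Hx.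
  - matrix_at H 7 0. exact H.
  - intros a _ IH. matrix_at H 1 a. auto.
  - intros e Htot _ IH. pose proof (H (pair 2 (pair e 0))) as Hr.
    unfold notO_matrix in Hr. pair_simpl.
    destruct Hr as [Hc|[[HW0 _]|[HW1 [Vs [H1 [H2 Hlt]]]]]]; [exact Hc| |].
    + destruct (Htot (sndn (f (pair 2 e)))) as [y Hy].
      destruct (history_of_phi f _ _ _ Hy) as [s [Vs Hs]].
      matrix_at H 2 (pair e (pair s y)).
      destruct H as [Hc|[[_ Hn]|[HW1 _]]]; pair_simpl; [exact Hc|tauto|congruence].
    + exfalso. apply Hlt. eapply IH; eapply phi_of_history; eauto.
  - intros a _ IH. matrix_at H 3 a. auto.
  - intros b a _ IH. matrix_at H 4 (pair b a). pair_simpl. auto.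
  - intros b e k y _ IHlim Hk _ IHlt.
    destruct (history_of_phi f _ _ _ Hk) as [s [Vs Hs]].
    matrix_at H 5 (code_seq [b; e; k; y; s]). rewrite !coded_nth_code_seq in H. simpl in H.
    auto.
Qed.

Lemma notO_matrix_sound f n : (forall m, notO_matrix f n m) -> ~ inO n.
Proof.
  intros H Hn. pose proof (claims_of_closed f n H n Hn) as Hc.
  matrix_at H 0 0. contradiction.
Qed.

Definition limit_refutation e W : Prop :=
  let D := sndn W in
  (fstn W = 0 /\ forall y, ~ phi e D y) \/
  (fstn W = 1 /\
    let k := coded_nth D 0 in let y := coded_nth D 1 in
    let z := coded_nth D 2 in let s := coded_nth D 3 in
    valid_history false (fun _ => 0) s /\ history_has s e k y /\ history_has s e (S k) z /\
    ~ ltO y z).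

Lemma limit_refutation_exists e : ~ inO (lim_notation e) -> exists W, limit_refutation e W.
Proof.
  intros HnO. unfold limit_refutation.
  destruct (classic (exists k, forall y, ~ phi e k y)) as [[k Hk]|Hall].
  { exists (pair 0 k). left. pair_simpl. auto. }
  assert (Htot : forall k, exists y, phi e k y).
  { intros k. apply NNPP. intros Hn. apply Hall. exists k. intros y Hy. apply Hn. eauto. }
  assert (Hbad : exists k y z, phi e k y /\ phi e (S k) z /\ ~ ltO y z).
  { apply NNPP. intros Hn. apply HnO. apply O_lim; auto.
    intros k y z H1 H2. apply NNPP. intros H3. apply Hn. eauto 6. }
  destruct Hbad as [k [y [z [H1 [H2 H3]]]]].
  destruct (history_complete_many false (fun _ => 0) 2
    (fun i => if i =? 0 then (e, k, y) else (e, S k, z))) as [s [Vs Hs]].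
  { intros [|[|i]] Hi; simpl; auto; lia. }
  exists (pair 1 (code_seq [k; y; z; s])). right. pair_simpl.
  rewrite !coded_nth_code_seq. simpl.
  repeat split; auto; [exact (Hs 0 ltac:(lia))|exact (Hs 1 ltac:(lia))].
Qed.

Definition flag (P : Prop) : nat := if excluded_middle_informative P then 0 else 1.

Lemma flag_zero P : flag P = 0 <-> P.
Proof. unfold flag. destruct (excluded_middle_informative P); split; congruence || tauto. Qed.

Definition some_limit_refutation (e : nat) : nat :=
  match excluded_middle_informative (exists W, limit_refutation e W) with
  | left H => proj1_sig (constructive_indefinite_description _ H)
  | right _ => 0
  end.

Lemma some_limit_refutation_spec e :
  ~ inO (lim_notation e) -> limit_refutation e (some_limit_refutation e).
Proof.
  intros H. unfold some_limit_refutation. destruct (excluded_middle_informative _) as [H'|H'].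
  - apply proj2_sig.
  - exfalso. apply H', limit_refutation_exists, H.
Qed.

Definition O_oracle (m : nat) : nat :=
  match fstn m with
  | 0 => flag (inO (sndn m))
  | 1 => flag (ltO (fstn (sndn m)) (sndn (sndn m)))
  | 2 => some_limit_refutation (sndn m)
  | _ => 0
  end.

Lemma claims_O_oracle x : claims_O O_oracle x <-> inO x.
Proof. unfold claims_O, O_oracle. pair_simpl. apply flag_zero. Qed.

Lemma claims_lt_O_oracle x y : claims_lt O_oracle x y <-> ltO x y.
Proof. unfold claims_lt, O_oracle. pair_simpl. apply flag_zero. Qed.

Lemma limit_refuted_O_oracle e q : ~ inO (lim_notation e) -> limit_refuted O_oracle e q.
Proof.
  intros He. pose proof (some_limit_refutation_spec e He) as Hr.
  unfold limit_refuted. replace (O_oracle (pair 2 e)) with (some_limit_refutation e)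
    by (unfold O_oracle; pair_simpl; reflexivity).
  destruct Hr as [[H0 Hdiv]|[H1 [Vs [Hy [Hz Hlt]]]]]; [left|right]; split; auto.
  - intros [Vq Hq]. exact (Hdiv _ (phi_of_history _ _ _ _ _ Vq Hq)).
  - rewrite claims_lt_O_oracle. repeat split; auto.
Qed.

Lemma notO_matrix_complete n : ~ inO n -> forall m, notO_matrix O_oracle n m.
Proof.
  intros Hn m. unfold notO_matrix. cbv zeta.
  destruct (fstn m) as [|[|[|[|[|[|t]]]]]];
    rewrite ?claims_O_oracle, ?claims_lt_O_oracle.
  - exact Hn.
  - apply O_succ.
  - destruct (classic (inO (lim_notation (fstn (sndn m))))) as [H|H];
      [left; exact H|right; apply limit_refuted_O_oracle, H].
  - apply lt_succ.
  - apply lt_succ_trans.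
  - intros Hlim Vs Hs Hb. eapply lt_lim; eauto. eapply phi_of_history; eauto.
  - apply O_one.
Qed.

Theorem notO_iff_matrix n : ~ inO n <-> exists f, forall m, notO_matrix f n m.
Proof.
  split.
  - intros H. exists O_oracle. apply notO_matrix_complete, H.
  - intros [f H]. apply (notO_matrix_sound f), H.
Qed.

Definition EClaimsO x := EEq (EOracle (EPair EZero x)) EZero.
Definition EClaimsLt x y := EEq (EOracle (EPair (ENat 1) (EPair x y))) EZero.
Definition ELimNotation e := EMul (ENat 3) (EPow (ENat 5) e).

Definition ELimitRefuted e q :=
  let W := EOracle (EPair (ENat 2) e) in let D := ESnd W in
  let k := ECoord D 0 in let y := ECoord D 1 in let z := ECoord D 2 in let s := ECoord D 3 in
  EOr (EAnd (EEq (EFst W) EZero)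
            (ENot (EAnd (EValidHistory false (EFst q)) (EHistoryHas (EFst q) e D (ESnd q)))))
      (EAnd (EEq (EFst W) (ENat 1))
            (EAnd (EValidHistory false s) (EAnd (EHistoryHas s e k y)
              (EAnd (EHistoryHas s e (ESucc k) z) (ENot (EClaimsLt y z)))))).

(* In the environment [n, m]. *)
Definition ENotOMatrix : expr :=
  let p := EVar 0 in let n := EVar 1 in let t := EFst (EVar 2) in
  let b := ECoord p 0 in let e := ECoord p 1 in let k := ECoord p 2 in
  let y := ECoord p 3 in let s := ECoord p 4 in
  ELet (ESnd (EVar 1)) (ECases t
    [ENot (EClaimsO n);
     EImp (EClaimsO p) (EClaimsO (EPow (ENat 2) p));
     EOr (EClaimsO (ELimNotation (EFst p))) (ELimitRefuted (EFst p) (ESnd p));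
     EImp (EClaimsO p) (EClaimsLt p (EPow (ENat 2) p));
     EImp (EClaimsLt (EFst p) (ESnd p)) (EClaimsLt (EFst p) (EPow (ENat 2) (ESnd p)));
     EImp (EClaimsO (ELimNotation e)) (EImp (EValidHistory false s) (EImp (EHistoryHas s e k y)
       (EImp (EClaimsLt b y) (EClaimsLt b (ELimNotation e)))))]
    (EClaimsO (ENat 1))).

Section MatrixSemantics.
Variable f : nat -> nat.

Lemma sem_EClaimsO x r : sem f (EClaimsO x) r = 0 <-> claims_O f (sem f x r).
Proof. unfold EClaimsO. rewrite sem_EEq. reflexivity. Qed.

Lemma sem_EClaimsLt x y r : sem f (EClaimsLt x y) r = 0 <-> claims_lt f (sem f x r) (sem f y r).
Proof. unfold EClaimsLt. rewrite sem_EEq. reflexivity. Qed.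

Lemma sem_ELimNotation e r : sem f (ELimNotation e) r = lim_notation (sem f e r).
Proof. unfold ELimNotation. rewrite sem_EMul, sem_EPow, !sem_ENat. reflexivity. Qed.

Lemma sem_ELimitRefuted e q r :
  sem f (ELimitRefuted e q) r = 0 <-> limit_refuted f (sem f e r) (sem f q r).
Proof.
  unfold ELimitRefuted, limit_refuted. cbv zeta.
  do 4 (rewrite ?sem_EOr, ?sem_EAnd, ?sem_EEq, ?sem_ENot, ?sem_EValidHistory,
    ?sem_EHistoryHas, ?sem_EClaimsLt, ?sem_ECoord, ?sem_ENat; cbn [sem]).
  reflexivity.
Qed.

Lemma sem_ENotOMatrix n m : sem f ENotOMatrix (env2 n m) = 0 <-> notO_matrix f n m.
Proof.
  unfold ENotOMatrix. cbv zeta. cbn [sem]. rewrite sem_ECases. cbn [sem scons env2].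
  unfold notO_matrix.
  destruct (fstn m) as [|[|[|[|[|[|t]]]]]]; cbn [nth_error]; rewrite ?nth_error_nil;
    rewrite ?sem_ENot, ?sem_EImp, ?sem_EOr, ?sem_EClaimsO, ?sem_EClaimsLt, ?sem_EPow,
      ?sem_ELimNotation, ?sem_ELimitRefuted, ?sem_ENat; cbn [sem scons].
  all: rewrite ?sem_EImp, ?sem_EValidHistory, ?sem_EHistoryHas, ?sem_EClaimsLt, ?sem_EClaimsO,
    ?sem_ECoord, ?sem_ELimNotation; reflexivity.
Qed.
End MatrixSemantics.

Theorem Sigma11_not_O : Sigma11 (fun n => ~ KleeneO n).
Proof.
  apply (Sigma11_of_expr _ ENotOMatrix). intros n. unfold KleeneO.
  rewrite notO_iff_matrix. split; intros [f H]; exists f; intros m; apply sem_ENotOMatrix, H.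
Qed.

(* Decoding [code_list], which codes a tuple [x :: t] by [S <x, code_list t>]. *)
Definition list_tail (k l : nat) : nat := Nat.iter k (fun x => sndn (pred x)) l.
Definition list_elem (i l : nat) : nat := fstn (pred (list_tail i l)).

Lemma list_tail_succ k l : list_tail (S k) l = list_tail k (sndn (pred l)).
Proof. unfold list_tail. rewrite Nat.iter_succ_r. reflexivity. Qed.

Lemma list_tail_code_list i : forall t, list_tail i (code_list t) = code_list (skipn i t).
Proof.
  induction i; intros t; [reflexivity|].
  rewrite list_tail_succ. destruct t as [|x t]; simpl.
  - clear IHi. induction i; simpl; auto. unfold list_tail in *. simpl. rewrite IHi. reflexivity.
  - rewrite sndn_pair. apply IHi.
Qed.

Lemma skipn_nth_cons i : forall (t : list nat), i < length t ->
  skipn i t = nth i t 0 :: skipn (S i) t.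
Proof. induction i; intros [|x t] H; simpl in *; try lia; auto. apply IHi. lia. Qed.

Lemma list_elem_code_list i t : i < length t -> list_elem i (code_list t) = nth i t 0.
Proof.
  intros H. unfold list_elem. rewrite list_tail_code_list, skipn_nth_cons by auto.
  simpl. apply fstn_pair.
Qed.

Lemma list_tail_code_list_nonzero i t : i < length t -> list_tail i (code_list t) <> 0.
Proof. intros H. rewrite list_tail_code_list, skipn_nth_cons by auto. simpl. lia. Qed.

Lemma list_tail_code_list_length t : list_tail (length t) (code_list t) = 0.
Proof. rewrite list_tail_code_list, skipn_all. reflexivity. Qed.

Lemma code_list_of_tails len : forall l, list_tail len l = 0 ->
  (forall i, i < len -> list_tail i l <> 0) ->
  l = code_list (map (fun i => list_elem i l) (seq 0 len)).
Proof.
  induction len; intros l H0 Hnz; [exact H0|].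
  assert (Hl : l <> 0) by (apply (Hnz 0); lia).
  rewrite list_tail_succ in H0.
  assert (IH : sndn (pred l) =
               code_list (map (fun i => list_elem i (sndn (pred l))) (seq 0 len))).
  { apply IHlen; auto. intros i Hi. rewrite <- list_tail_succ. apply Hnz. lia. }
  simpl. rewrite <- seq_shift, map_map.
  erewrite map_ext; [rewrite <- IH|intros i; unfold list_elem; rewrite list_tail_succ; reflexivity].
  unfold list_elem, list_tail; simpl. rewrite pair_fstn_sndn. lia.
Qed.

Definition ETail k l := ERec l (ESnd (EPred (EVar 0))) k.
Definition EElem i l := EFst (EPred (ETail i l)).

Lemma sem_ETail A k l r : sem A (ETail k l) r = list_tail (sem A k r) (sem A l r).
Proof.
  unfold ETail, list_tail. cbn [sem]. induction (sem A k r) as [|m IH]; [reflexivity|].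
  cbn [iter_rec]. rewrite sem_EPred. cbn [sem scons]. rewrite IH. reflexivity.
Qed.

Lemma sem_EElem A i l r : sem A (EElem i l) r = list_elem (sem A i r) (sem A l r).
Proof. unfold EElem, list_elem. cbn [sem]. rewrite sem_EPred, sem_ETail. reflexivity. Qed.

(** * Certified failures of the loquacious isomorphism *)

(* Given [a], [b] and the total functions [Theta(a, b, .)], [Theta(b, a, .)], a
   failure is a finite configuration, certified by histories, showing that the first
   is not an isomorphism from [M_a] onto [M_b] with the second as inverse.  In a point
   failure, [bit] selects the direction: [u, v] is [a, b] or [b, a]. *)
Definition pick (bit a b : nat) : nat := match bit with 0 => a | S _ => b end.

Section Failures.
Variables (A : nat -> nat) (T : nat).

(* [kd = 0]: [x] is in the domain of [M_u] but its image is not in that of [M_v];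
   [kd = 1]: going back and forth does not return to [x]. *)
Definition point_failure (kd a b Dd : nat) : Prop :=
  let bit := coded_nth Dd 0 in let u := pick bit a b in let v := pick bit b a in
  let x := coded_nth Dd 1 in let fx := coded_nth Dd 2 in let c := coded_nth Dd 3 in
  let s0 := coded_nth Dd 4 in let s1 := coded_nth Dd 5 in
  valid_history false A s0 /\ history_has s0 u (pair 0 x) 1 /\
  valid_history true A s1 /\ history_has s1 T (pair u (pair v x)) fx /\
  match kd with
  | 0 => history_has s0 v (pair 0 fx) c /\ c <> 1
  | _ => history_has s1 T (pair v (pair u fx)) c /\ c <> x
  end.

(* The relation [R_k] holds of a tuple [tl] of elements of [M_a] and fails of its image
   [tl'], or conversely. *)
Definition relation_failure (a b Dd : nat) : Prop :=
  let k := coded_nth Dd 0 in let tl := coded_nth Dd 1 in let tl' := coded_nth Dd 2 in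
  let len := coded_nth Dd 3 in let c1 := coded_nth Dd 4 in let c2 := coded_nth Dd 5 in
  let s0 := coded_nth Dd 6 in let s1 := coded_nth Dd 7 in
  valid_history false A s0 /\ valid_history true A s1 /\
  history_has s0 a (pair (S k) tl) c1 /\ history_has s0 b (pair (S k) tl') c2 /\
  ((c1 = 1 /\ c2 <> 1) \/ (c1 <> 1 /\ c2 = 1)) /\
  list_tail len tl = 0 /\ list_tail len tl' = 0 /\
  (forall i, i < len -> list_tail i tl <> 0 /\ list_tail i tl' <> 0 /\
     history_has s0 a (pair 0 (list_elem i tl)) 1 /\
     history_has s1 T (pair a (pair b (list_elem i tl))) (list_elem i tl')).

(* [w = [p; s; kind; Dd]] where [s] is a history of [phi_rI(n) = p = <a, b>]. *)
Definition iso_failure (rI n w : nat) : Prop :=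
  let p := coded_nth w 0 in let s := coded_nth w 1 in
  let kind := coded_nth w 2 in let Dd := coded_nth w 3 in
  valid_history false A s /\ history_has s rI n p /\
  match kind with
  | 0 => point_failure 0 (fstn p) (sndn p) Dd
  | 1 => point_failure 1 (fstn p) (sndn p) Dd
  | 2 => relation_failure (fstn p) (sndn p) Dd
  | _ => False
  end.
End Failures.

Definition EPointFailure (T kd : nat) (a b Dd : expr) : expr :=
  let bit := ECoord Dd 0 in let u := EIf0 bit a b in let v := EIf0 bit b a in
  let x := ECoord Dd 1 in let fx := ECoord Dd 2 in let c := ECoord Dd 3 in
  let s0 := ECoord Dd 4 in let s1 := ECoord Dd 5 in
  EAnd (EValidHistory false s0) (EAnd (EHistoryHas s0 u (EPair EZero x) (ENat 1))
  (EAnd (EValidHistory true s1) (EAnd (EHistoryHas s1 (ENat T) (EPair u (EPair v x)) fx)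
  (match kd with
   | 0 => EAnd (EHistoryHas s0 v (EPair EZero fx) c) (ENot (EEq c (ENat 1)))
   | _ => EAnd (EHistoryHas s1 (ENat T) (EPair v (EPair u fx)) c) (ENot (EEq c x))
   end)))).

Definition ERelationFailure (T : nat) (a b Dd : expr) : expr :=
  let k := ECoord Dd 0 in let tl := ECoord Dd 1 in let tl' := ECoord Dd 2 in
  let len := ECoord Dd 3 in let c1 := ECoord Dd 4 in let c2 := ECoord Dd 5 in
  let s0 := ECoord Dd 6 in let s1 := ECoord Dd 7 in
  let up := shift 0 1 in let i := EVar 0 in
  EAnd (EValidHistory false s0) (EAnd (EValidHistory true s1)
  (EAnd (EHistoryHas s0 a (EPair (ESucc k) tl) c1)
  (EAnd (EHistoryHas s0 b (EPair (ESucc k) tl') c2)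
  (EAnd (EOr (EAnd (EEq c1 (ENat 1)) (ENot (EEq c2 (ENat 1))))
             (EAnd (ENot (EEq c1 (ENat 1))) (EEq c2 (ENat 1))))
  (EAnd (EEq (ETail len tl) EZero) (EAnd (EEq (ETail len tl') EZero)
  (EForall_lt len
     (EAnd (ENot (ETail i (up tl))) (EAnd (ENot (ETail i (up tl')))
     (EAnd (EHistoryHas (up s0) (up a) (EPair EZero (EElem i (up tl))) (ENat 1))
           (EHistoryHas (up s1) (ENat T) (EPair (up a) (EPair (up b) (EElem i (up tl))))
              (EElem i (up tl'))))))))))))).

(* In the environment [n, w]. *)
Definition EIsoFailure (rI T : nat) : expr :=
  let n := EVar 0 in let w := EVar 1 in
  let p := ECoord w 0 in let s := ECoord w 1 in let kind := ECoord w 2 in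
  let Dd := ECoord w 3 in let a := EFst p in let b := ESnd p in
  EAnd (EValidHistory false s) (EAnd (EHistoryHas s (ENat rI) n p)
    (ECases kind [EPointFailure T 0 a b Dd; EPointFailure T 1 a b Dd; ERelationFailure T a b Dd]
       (ENat 1))).

Section FailureSemantics.
Variables (A : nat -> nat) (T : nat).

Lemma sem_pick bit a b r :
  sem A (EIf0 bit a b) r = pick (sem A bit r) (sem A a r) (sem A b r).
Proof. rewrite sem_EIf0. destruct (sem A bit r); reflexivity. Qed.

Lemma sem_EPointFailure kd a b Dd r : sem A (EPointFailure T kd a b Dd) r = 0 <->
  point_failure A T kd (sem A a r) (sem A b r) (sem A Dd r).
Proof.
  unfold EPointFailure, point_failure. cbv zeta.
  rewrite !sem_EAnd, !sem_EValidHistory, !sem_EHistoryHas. cbn [sem].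
  rewrite !sem_pick, !sem_ECoord, !sem_ENat.
  destruct kd; rewrite sem_EAnd, sem_EHistoryHas, sem_ENot_EEq; cbn [sem];
    rewrite ?sem_pick, !sem_ECoord, ?sem_ENat; reflexivity.
Qed.

Lemma sem_ERelationFailure a b Dd r : sem A (ERelationFailure T a b Dd) r = 0 <->
  relation_failure A T (sem A a r) (sem A b r) (sem A Dd r).
Proof.
  unfold ERelationFailure, relation_failure. cbv zeta.
  rewrite !sem_EAnd, !sem_EValidHistory, !sem_EHistoryHas, sem_EOr, !sem_EAnd,
    !sem_ENot_EEq, !sem_EEq, sem_EForall_lt, !sem_ETail. cbn [sem].
  rewrite !sem_ECoord, !sem_ENat.
  setoid_rewrite sem_EAnd. setoid_rewrite sem_ENot. setoid_rewrite sem_EAnd.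
  setoid_rewrite sem_ENot. setoid_rewrite sem_EAnd. setoid_rewrite sem_EHistoryHas.
  cbn [sem scons]. setoid_rewrite sem_ETail. setoid_rewrite sem_EElem.
  cbn [sem scons]. setoid_rewrite sem_shift1. setoid_rewrite sem_ENat.
  reflexivity.
Qed.

Lemma sem_EIsoFailure rI n w :
  sem A (EIsoFailure rI T) (env2 n w) = 0 <-> iso_failure A T rI n w.
Proof.
  unfold EIsoFailure, iso_failure. cbv zeta.
  rewrite !sem_EAnd, sem_EValidHistory, sem_EHistoryHas, sem_ECases, !sem_ECoord, sem_ENat.
  unfold env2; cbn [sem scons].
  destruct (coded_nth w 2) as [|[|[|kind]]]; cbn [nth_error]; rewrite ?nth_error_nil;
    rewrite ?sem_EPointFailure, ?sem_ERelationFailure, ?sem_ENat; cbn [sem scons];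
    rewrite ?sem_ECoord; cbn [sem scons]; try reflexivity.
  split; intros (_ & _ & H); [discriminate H|contradiction].
Qed.
End FailureSemantics.

Section FailureSound.
Variables (T : nat) (D : nat -> bool) (a b : nat) (f g : nat -> nat).
Hypothesis Hf : forall x, Phi (chi D) T (pair a (pair b x)) (f x).
Hypothesis Hg : forall y, Phi (chi D) T (pair b (pair a y)) (g y).
Hypothesis Hiso : IsIso (M a) (M b) f.
Hypothesis Hgf : forall x, sdom (M a) x -> g (f x) = x.
Hypothesis Hfg : forall y, sdom (M b) y -> f (g y) = y.

Lemma inverse_maps_domain y : sdom (M b) y -> sdom (M a) (g y).
Proof.
  intros Hy. destruct Hiso as [_ [_ [Hsurj _]]].
  destruct (Hsurj y Hy) as [x [Hx <-]]. rewrite Hgf; auto.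
Qed.

Lemma point_failure_impossible kd Dd : ~ point_failure (chi D) T kd a b Dd.
Proof.
  destruct Hiso as [Hdom _].
  unfold point_failure. cbv zeta.
  set (x := coded_nth Dd 1). set (fx := coded_nth Dd 2). set (c := coded_nth Dd 3).
  intros (V0 & Hx & V1 & Hfx & Hkd).
  apply (phi_of_history _ _ _ _ _ V0) in Hx. apply (Phi_of_history _ _ _ _ _ V1) in Hfx.
  destruct (coded_nth Dd 0); simpl pick in *.
  - rewrite (eval_functional _ _ _ _ Hfx _ (Hf x)) in *.
    destruct kd; destruct Hkd as [Hc Hne]; apply Hne.
    + exact (eval_functional _ _ _ _ (phi_of_history _ _ _ _ _ V0 Hc) _ (Hdom _ Hx)).
    + rewrite <- (Hgf x Hx).
      exact (eval_functional _ _ _ _ (Phi_of_history _ _ _ _ _ V1 Hc) _ (Hg _)).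
  - rewrite (eval_functional _ _ _ _ Hfx _ (Hg x)) in *.
    destruct kd; destruct Hkd as [Hc Hne]; apply Hne.
    + exact (eval_functional _ _ _ _ (phi_of_history _ _ _ _ _ V0 Hc) _
               (inverse_maps_domain _ Hx)).
    + rewrite <- (Hfg x Hx).
      exact (eval_functional _ _ _ _ (Phi_of_history _ _ _ _ _ V1 Hc) _ (Hf _)).
Qed.

Lemma relation_failure_impossible Dd : ~ relation_failure (chi D) T a b Dd.
Proof.
  destruct Hiso as [_ [_ [_ Hrel]]].
  unfold relation_failure. cbv zeta.
  set (tl := coded_nth Dd 1). set (tl' := coded_nth Dd 2). set (len := coded_nth Dd 3).
  intros (V0 & V1 & H1 & H2 & Hxor & T1 & T2 & Hall).
  apply (phi_of_history _ _ _ _ _ V0) in H1. apply (phi_of_history _ _ _ _ _ V0) in H2.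
  set (t := map (fun i => list_elem i tl) (seq 0 len)).
  assert (Etl : tl = code_list t).
  { apply code_list_of_tails; auto. intros i Hi; apply Hall; auto. }
  assert (Etl' : tl' = code_list (map f t)).
  { rewrite (code_list_of_tails len tl') at 1; auto; [|intros i Hi; apply Hall; auto].
    f_equal. unfold t. rewrite map_map. apply map_ext_in. intros i Hi.
    apply in_seq in Hi. destruct (Hall i ltac:(lia)) as (_ & _ & _ & Hi').
    exact (eval_functional _ _ _ _ (Phi_of_history _ _ _ _ _ V1 Hi') _ (Hf _)). }
  assert (Ht : Forall (sdom (M a)) t).
  { apply Forall_forall. intros x Hx. unfold t in Hx. apply in_map_iff in Hx.
    destruct Hx as [i [<- Hi]]. apply in_seq in Hi.
    destruct (Hall i ltac:(lia)) as (_ & _ & Hd & _). exact (phi_of_history _ _ _ _ _ V0 Hd). }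
  specialize (Hrel (coded_nth Dd 0) t Ht). simpl in Hrel. rewrite <- Etl, <- Etl' in Hrel.
  destruct Hxor as [[E1 E2]|[E1 E2]].
  - rewrite E1 in H1. apply Hrel in H1. exact (E2 (eval_functional _ _ _ _ H2 _ H1)).
  - rewrite E2 in H2. apply Hrel in H2. exact (E1 (eval_functional _ _ _ _ H1 _ H2)).
Qed.
Lemma iso_failure_impossible rI n w :
  phi rI n (pair a b) -> ~ iso_failure (chi D) T rI n w.
Proof.
  intros Hr (Vs & Hs & Hkind).
  apply (phi_of_history _ _ _ _ _ Vs), (eval_functional _ _ _ _ Hr) in Hs.
  rewrite <- Hs in Hkind. pair_simpl.
  destruct (coded_nth w 2) as [|[|[|]]]; [| | |exact Hkind];
    [apply (point_failure_impossible 0 _ Hkind)|apply (point_failure_impossible 1 _ Hkind)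
    |apply (relation_failure_impossible _ Hkind)].
Qed.
End FailureSound.

Lemma not_iso_cases (S S' : structure) (f g : nat -> nat) : ~ Isomorphic S S' ->
  (exists x, sdom S x /\ ~ sdom S' (f x)) \/
  (exists y, sdom S' y /\ ~ sdom S (g y)) \/
  (exists x, sdom S x /\ g (f x) <> x) \/
  (exists y, sdom S' y /\ f (g y) <> y) \/
  (exists k t, Forall (sdom S) t /\ ~ (srel S k t <-> srel S' k (map f t))).
Proof.
  intros Hn. apply NNPP. intros Hall. apply Hn. exists f.
  split; [|split; [|split]].
  - intros x Hx. apply NNPP. intros H. apply Hall. left. eauto.
  - intros x y Hx Hy E.
    assert (Ex : g (f x) = x) by (apply NNPP; intros H; apply Hall; do 2 right; left; eauto).
    assert (Ey : g (f y) = y) by (apply NNPP; intros H; apply Hall; do 2 right; left; eauto).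
    congruence.
  - intros y Hy. exists (g y). split.
    + apply NNPP. intros H. apply Hall. right; left. eauto.
    + apply NNPP. intros H. apply Hall. do 3 right; left. eauto.
  - intros k t Ht. apply NNPP. intros H. apply Hall. do 4 right. eauto.
Qed.

Section FailureComplete.
Variables (K : structure -> Prop) (T : nat) (D : nat -> bool) (a b : nat).
Hypotheses (Ka : inK K a) (Kb : inK K b).

Lemma domain_failure_witness bit x fx c :
  let u := pick bit a b in let v := pick bit b a in
  phi u (pair 0 x) 1 -> Phi (chi D) T (pair u (pair v x)) fx -> phi v (pair 0 fx) c -> c <> 1 ->
  exists Dd, point_failure (chi D) T 0 a b Dd.
Proof.
  intros u v Hx Hfx Hc Hne.
  destruct (history_complete_many false (chi D) 2
    (fun i => if i =? 0 then (u, pair 0 x, 1) else (v, pair 0 fx, c))) as [s0 [V0 Hs0]].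
  { intros [|[|i]] Hi; simpl; auto; lia. }
  destruct (history_of_Phi _ _ _ _ Hfx) as [s1 [V1 Hs1]].
  exists (code_seq [bit; x; fx; c; s0; s1]). unfold point_failure.
  rewrite !coded_nth_code_seq. simpl.
  repeat split; auto; [exact (Hs0 0 ltac:(lia))|exact (Hs0 1 ltac:(lia))].
Qed.

Lemma inverse_failure_witness bit x fx c :
  let u := pick bit a b in let v := pick bit b a in
  phi u (pair 0 x) 1 -> Phi (chi D) T (pair u (pair v x)) fx ->
  Phi (chi D) T (pair v (pair u fx)) c -> c <> x ->
  exists Dd, point_failure (chi D) T 1 a b Dd.
Proof.
  intros u v Hx Hfx Hc Hne.
  destruct (history_of_phi (chi D) _ _ _ Hx) as [s0 [V0 Hs0]].
  destruct (history_complete_many true (chi D) 2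
    (fun i => if i =? 0 then (T, pair u (pair v x), fx) else (T, pair v (pair u fx), c)))
    as [s1 [V1 Hs1]].
  { intros [|[|i]] Hi; simpl; auto; lia. }
  exists (code_seq [bit; x; fx; c; s0; s1]). unfold point_failure.
  rewrite !coded_nth_code_seq. simpl.
  repeat split; auto; [exact (Hs1 0 ltac:(lia))|exact (Hs1 1 ltac:(lia))].
Qed.

Lemma phi_total_ne1 u z : inK K u -> ~ phi u z 1 -> exists c, c <> 1 /\ phi u z c.
Proof.
  intros [Hu _] Hn. destruct (Hu z) as [c [_ Hp]]. exists c. split; auto. intros ->; auto.
Qed.

Lemma relation_failure_witness (f : nat -> nat) k t :
  (forall x, Phi (chi D) T (pair a (pair b x)) (f x)) ->
  Forall (sdom (M a)) t -> ~ (srel (M a) k t <-> srel (M b) k (map f t)) ->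
  exists Dd, relation_failure (chi D) T a b Dd.
Proof.
  intros Hf Ht Hnr.
  destruct Ka as [Ha _], Kb as [Hb _].
  destruct (Ha (pair (S k) (code_list t))) as [c1 [_ Hc1]].
  destruct (Hb (pair (S k) (code_list (map f t)))) as [c2 [_ Hc2]].
  assert (Hxor : (c1 = 1 /\ c2 <> 1) \/ (c1 <> 1 /\ c2 = 1)).
  { simpl in Hnr.
    destruct (Nat.eq_dec c1 1) as [E1|E1], (Nat.eq_dec c2 1) as [E2|E2]; subst; auto;
      exfalso; apply Hnr; split; intros H; auto.
    - exfalso; apply E1; exact (eval_functional _ _ _ _ Hc1 _ H).
    - exfalso; apply E2; exact (eval_functional _ _ _ _ Hc2 _ H). }
  set (len := length t).
  destruct (history_complete_many false (chi D) (len + 2)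
    (fun i => if i <? len then (a, pair 0 (nth i t 0), 1)
              else if i =? len then (a, pair (S k) (code_list t), c1)
              else (b, pair (S k) (code_list (map f t)), c2))) as [s0 [V0 Hs0]].
  { intros i Hi. destruct (Nat.ltb_spec i len).
    - rewrite Forall_forall in Ht. apply Ht, nth_In. auto.
    - destruct (Nat.eqb_spec i len); auto. }
  destruct (history_complete_many true (chi D) len
    (fun i => (T, pair a (pair b (nth i t 0)), f (nth i t 0)))) as [s1 [V1 Hs1]].
  { intros i Hi. apply Hf. }
  exists (code_seq [k; code_list t; code_list (map f t); len; c1; c2; s0; s1]).
  unfold relation_failure. rewrite !coded_nth_code_seq. simpl nth.
  assert (Hlen : length (map f t) = len) by apply length_map.
  refine (conj V0 (conj V1 (conj _ (conj _ (conj Hxor (conj _ (conj _ _))))))).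
  - specialize (Hs0 len ltac:(lia)). rewrite Nat.ltb_irrefl, Nat.eqb_refl in Hs0. exact Hs0.
  - specialize (Hs0 (S len) ltac:(lia)).
    destruct (Nat.ltb_spec (S len) len), (Nat.eqb_spec (S len) len); try lia. exact Hs0.
  - apply list_tail_code_list_length.
  - rewrite <- Hlen. apply list_tail_code_list_length.
  - intros i Hi. rewrite !list_elem_code_list by lia. repeat split.
    + apply list_tail_code_list_nonzero. auto.
    + apply list_tail_code_list_nonzero. lia.
    + specialize (Hs0 i ltac:(lia)). destruct (Nat.ltb_spec i len); [exact Hs0|lia].
    + rewrite (nth_indep (map f t) 0 (f 0)), map_nth by lia. apply (Hs1 i Hi).
Qed.
End FailureComplete.

Lemma iso_failure_exists (K : structure -> Prop) (T : nat) (D : nat -> bool) rI n a b :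
  (forall i j x, exists y, Phi (chi D) T (pair i (pair j x)) y) ->
  phi rI n (pair a b) -> inK K a -> inK K b -> ~ Isomorphic (M a) (M b) ->
  exists w, iso_failure (chi D) T rI n w.
Proof.
  intros Htot Hr Ka Kb Hni.
  destruct (choice (fun x y => Phi (chi D) T (pair a (pair b x)) y) (Htot a b)) as [f Hf].
  destruct (choice (fun x y => Phi (chi D) T (pair b (pair a x)) y) (Htot b a)) as [g Hg].
  destruct (history_of_phi (chi D) _ _ _ Hr) as [s [Vs Hs]].
  assert (Hw : forall kind Dd,
    match kind with
    | 0 => point_failure (chi D) T 0 a b Dd
    | 1 => point_failure (chi D) T 1 a b Dd
    | 2 => relation_failure (chi D) T a b Dd
    | _ => False
    end -> exists w, iso_failure (chi D) T rI n w).
  { intros kind Dd Hk. exists (code_seq [pair a b; s; kind; Dd]).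
    unfold iso_failure. rewrite !coded_nth_code_seq. simpl nth. pair_simpl. auto. }
  destruct (not_iso_cases _ _ f g Hni) as
    [[x [Hx Hnx]]|[[y [Hy Hny]]|[[x [Hx Hne]]|[[y [Hy Hne]]|[k [t [Ht Hnr]]]]]]].
  - destruct (phi_total_ne1 K b _ Kb Hnx) as [c [Hc Hpc]].
    destruct (domain_failure_witness T D a b 0 x (f x) c Hx (Hf x) Hpc Hc) as [Dd HD].
    exact (Hw 0 Dd HD).
  - destruct (phi_total_ne1 K a _ Ka Hny) as [c [Hc Hpc]].
    destruct (domain_failure_witness T D a b 1 y (g y) c Hy (Hg y) Hpc Hc) as [Dd HD].
    exact (Hw 0 Dd HD).
  - destruct (inverse_failure_witness T D a b 0 x (f x) (g (f x)) Hx (Hf x) (Hg _) Hne)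
      as [Dd HD].
    exact (Hw 1 Dd HD).
  - destruct (inverse_failure_witness T D a b 1 y (g y) (f (g y)) Hy (Hg y) (Hf _) Hne)
      as [Dd HD].
    exact (Hw 1 Dd HD).
  - destruct (relation_failure_witness K T D a b Ka Kb f k t Hf Ht Hnr) as [Dd HD].
    exact (Hw 2 Dd HD).
Qed.

(* Membership in [X] is witnessed by a finite failure of the loquacious functional on
   the pair of structures the reduction assigns to [n]. *)
Theorem CErelative_of_co_Sigma11 (K : structure -> Prop) (d : (nat -> bool) -> Prop)
    (X : nat -> Prop) :
  IsoProblemSigma11Complete K -> LoquaciouslyHigh K d -> Sigma11 (fun n => ~ X n) ->
  CErelative X d.
Proof.
  intros Hcomplete [D [HD [T [Htot Hloq]]]] HX.
  destruct (Hcomplete _ HX) as [rI Hred].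
  apply (CErelative_of_expr X d D (EIsoFailure rI T) HD). intros n.
  setoid_rewrite sem_EIsoFailure.
  destruct (Hred n) as [a [b [Hr [Ka [Kb Hiso]]]]].
  split.
  - intros Hn. apply (iso_failure_exists K T D rI n a b Htot Hr Ka Kb). tauto.
  - intros [w Hw]. apply NNPP. intros Hn.
    destruct (Hloq a b Ka Kb (proj2 Hiso Hn)) as (f & g & Hf & Hg & Hi & Hgf & Hfg).
    exact (iso_failure_impossible T D a b f g Hf Hg Hi Hgf Hfg rI n w Hr Hw).
Qed.

Lemma uniformly_high_of_loquaciously_high (K : structure -> Prop) (d : (nat -> bool) -> Prop) :
  LoquaciouslyHigh K d -> UniformlyHigh K d.
Proof.
  intros [D [HD [T [_ Hloq]]]]. exists D. split; auto. exists T. intros i j Hi Hj HI.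
  destruct (Hloq i j Hi Hj HI) as (f & _ & Hf & _ & Hiso & _). eauto.
Qed.

Theorem mainTheorem13 (K : structure -> Prop) (d : (nat -> bool) -> Prop) :
  IsTuringDegree d ->
  IsoProblemSigma11Complete K ->
  LoquaciouslyHigh K d ->
  UniformlyHigh K d /\ CErelative KleeneO d.
Proof.
  intros _ Hcomplete Hloq. split.
  - exact (uniformly_high_of_loquaciously_high K d Hloq).
  - exact (CErelative_of_co_Sigma11 K d KleeneO Hcomplete Hloq Sigma11_not_O).
Qed.
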